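(* The reduction systems $(\mathcal T,\to_{\lambda j/{\tt CS}})$ and $(\mathcal T,\to_{\lambda j/{\tt o}})$ are both confluent and enjoy PSN (every $\beta$-strongly normalizing $\lambda$-term is strongly normalizing for $\to_{\lambda j/{\tt CS}}$, resp. $\to_{\lambda j/{\tt o}}$).
   Context: $\mathcal T$ is the set of $\lambda j$-terms, generated by $t,u::= x\mid \lambda x.t\mid t\,u\mid t[x/u]$; $\lambda x.t$ and $t[x/u]$ bind $x$ in $t$ (not in $u$), and terms are considered modulo $\alpha$-conversion. $\lambda$-terms are those without jumps. $\mathrm{fv}(t)$ is the set of free variables, $t\{x/u\}$ is capture-avoiding meta-level substitution, and $|t|_x$ is the number of free occurrences of $x$ in $t$. If $|t|_x=n\ge2$, $t_{[y]_x}$ denotes any term obtained from $t$ by replacing $k$ of the free occurrences of $x$ by a fresh variable $y$, for some $1\le k\le n-1$. ${\tt L}$ denotes a (possibly empty) list of jumps $[x_1/u_1]\dots[x_k/u_k]$. The rewriting rules, closed under all contexts, are: $({\tt dB})$ $(\lambda x.t){\tt L}\,u\to t[x/u]{\tt L}$ where no $x_i$ of ${\tt L}$ is free in $u$; $({\tt w})$ $t[x/u]\to t$ if $|t|_x=0$; $({\tt d})$ $t[x/u]\to t\{x/u\}$ if $|t|_x=1$; $({\tt c})$ $t[x/u]\to t_{[y]_x}[x/u][y/u]$ if $|t|_x\ge2$, $y$ fresh. $\to_{\lambda j}$ is the union of all four. $\equiv_{\tt CS}$ is the smallest equivalence closed under contexts containing $t[x/s][y/v]\sim t[y/v][x/s]$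 whenever $x\notin\mathrm{fv}(v)$ and $y\notin\mathrm{fv}(s)$. $\equiv_{\tt o}$ is the smallest equivalence closed under contexts containing that equation together with $\lambda y.(t[x/s])\sim(\lambda y.t)[x/s]$ if $y\notin\mathrm{fv}(s)$, and $t[x/s]\,v\sim(t\,v)[x/s]$ if $x\notin\mathrm{fv}(v)$. For an equivalence ${\tt E}$, $t\to_{\lambda j/{\tt E}}u$ iff $t\equiv_{\tt E}t'\to_{\lambda j}u'\equiv_{\tt E}u$ for some $t',u'$. $\beta$-reduction is the contextual closure of $(\lambda x.t)u\to t\{x/u\}$. *)

(* lambda-j terms with de Bruijn indices (terms modulo alpha). *)
From Stdlib Require Import Arith List Relations.

(* Var n | Lam t (binds 0 in t) | App t u | Jmp t u  =  t[x/u]  (binds 0 in t, not in u) *)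
Inductive term : Type :=
| Var : nat -> term
| Lam : term -> term
| App : term -> term -> term
| Jmp : term -> term -> term.

Definition upren (f : nat -> nat) (n : nat) : nat :=
  match n with 0 => 0 | S m => S (f m) end.

Fixpoint ren (f : nat -> nat) (t : term) : term :=
  match t with
  | Var n => Var (f n)
  | Lam t => Lam (ren (upren f) t)
  | App t u => App (ren f t) (ren f u)
  | Jmp t u => Jmp (ren (upren f) t) (ren f u)
  end.

Definition lift (t : term) : term := ren S t.

Definition swap01 (t : term) : term :=
  ren (fun n => match n with 0 => 1 | 1 => 0 | n => n end) t.

Definition up_sub (s : nat -> term) (n : nat) : term :=
  match n with 0 => Var 0 | S m => lift (s m) end.

Fixpoint subst (s : nat -> term) (t : term) : term :=
  match t with
  | Var n => s n
  | Lam t => Lam (subst (up_sub s) t)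
  | App t u => App (subst s t) (subst s u)
  | Jmp t u => Jmp (subst (up_sub s) t) (subst s u)
  end.

(* t{x/u}, x being the innermost bound variable (index 0) *)
Definition subst0 (u t : term) : term :=
  subst (fun n => match n with 0 => u | S m => Var m end) t.

Fixpoint occ (k : nat) (t : term) : nat :=
  match t with
  | Var n => if Nat.eqb n k then 1 else 0
  | Lam t => occ (S k) t
  | App t u => occ k t + occ k u
  | Jmp t u => occ (S k) t + occ k u
  end.

(* part k t t' : t' is obtained from t by replacing some (any) of the free
   occurrences of the variable x = index k by a fresh variable y, where in t'
   y is index k+1 and the other free variables >= k+1 are shifted up by one. *)
Inductive part : nat -> term -> term -> Prop :=
| part_x k : part k (Var k) (Var k)
| part_y k : part k (Var k) (Var (S k))
| part_lt k n : n < k -> part k (Var n) (Var n)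
| part_gt k n : k < n -> part k (Var n) (Var (S n))
| part_lam k t t' : part (S k) t t' -> part k (Lam t) (Lam t')
| part_app k t t' u u' : part k t t' -> part k u u' -> part k (App t u) (App t' u')
| part_jmp k t t' u u' : part (S k) t t' -> part k u u' -> part k (Jmp t u) (Jmp t' u').

(* t L  with L = [u1; ...; uk] is  t[x1/u1]...[xk/uk] *)
Fixpoint wrapL (t : term) (L : list term) : term :=
  match L with nil => t | u :: L' => wrapL (Jmp t u) L' end.

Inductive lj_root : term -> term -> Prop :=
| r_dB t L u :
    (* the side condition of dB is realised by lifting u past the jumps of L *)
    lj_root (App (wrapL (Lam t) L) u)
            (wrapL (Jmp t (ren (fun n => n + length L) u)) L)
| r_w t u : occ 0 t = 0 -> lj_root (Jmp t u) (ren Nat.pred t)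
| r_d t u : occ 0 t = 1 -> lj_root (Jmp t u) (subst0 u t)
| r_c t u t' : 2 <= occ 0 t -> part 0 t t' ->
    1 <= occ 1 t' -> occ 1 t' <= occ 0 t - 1 ->
    lj_root (Jmp t u) (Jmp (Jmp t' (lift u)) u).

Inductive ctx (R : term -> term -> Prop) : term -> term -> Prop :=
| ctx_root t u : R t u -> ctx R t u
| ctx_lam t t' : ctx R t t' -> ctx R (Lam t) (Lam t')
| ctx_appl t t' u : ctx R t t' -> ctx R (App t u) (App t' u)
| ctx_appr t u u' : ctx R u u' -> ctx R (App t u) (App t u')
| ctx_jmpl t t' u : ctx R t t' -> ctx R (Jmp t u) (Jmp t' u)
| ctx_jmpr t u u' : ctx R u u' -> ctx R (Jmp t u) (Jmp t u').

Definition lj_step : term -> term -> Prop := ctx lj_root.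

Inductive beta_root : term -> term -> Prop :=
| r_beta t u : beta_root (App (Lam t) u) (subst0 u t).

Definition beta_step : term -> term -> Prop := ctx beta_root.

(* equations of CS: t[x/s][y/v] ~ t[y/v][x/s], x notin fv v, y notin fv s *)
Inductive cs_ax : term -> term -> Prop :=
| ax_cs t s v : cs_ax (Jmp (Jmp t (lift s)) v) (Jmp (Jmp (swap01 t) (lift v)) s).

Inductive o_ax : term -> term -> Prop :=
| ax_o_cs t s v : o_ax (Jmp (Jmp t (lift s)) v) (Jmp (Jmp (swap01 t) (lift v)) s)
  (* lambda y.(t[x/s]) ~ (lambda y.t)[x/s], y notin fv s *)
| ax_o_lam t s : o_ax (Lam (Jmp t (lift s))) (Jmp (Lam (swap01 t)) s)
  (* t[x/s] v ~ (t v)[x/s], x notin fv v *)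
| ax_o_app t s v : o_ax (App (Jmp t s) v) (Jmp (App t (lift v)) s).

Definition equivE (ax : term -> term -> Prop) : term -> term -> Prop :=
  clos_refl_sym_trans term (ctx ax).

Definition equiv_CS := equivE cs_ax.
Definition equiv_o := equivE o_ax.

Definition lj_mod (E : term -> term -> Prop) (t u : term) : Prop :=
  exists t' u', E t t' /\ lj_step t' u' /\ E u' u.

Definition confluent (R : term -> term -> Prop) : Prop :=
  forall t u1 u2, clos_refl_trans term R t u1 -> clos_refl_trans term R t u2 ->
    exists v, clos_refl_trans term R u1 v /\ clos_refl_trans term R u2 v.

Definition SN (R : term -> term -> Prop) (t : term) : Prop :=
  Acc (fun a b => R b a) t.

Fixpoint is_lambda (t : term) : Prop :=
  match t with
  | Var _ => True
  | Lam t => is_lambda t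
  | App t u => is_lambda t /\ is_lambda u
  | Jmp _ _ => False
  end.

Definition PSN (R : term -> term -> Prop) : Prop :=
  forall t, is_lambda t -> SN beta_step t -> SN R t.

From Stdlib Require Import Arith List Relations Lia Permutation.
From Stdlib Require Import Wellfounded.Transitive_Closure Wellfounded.Inclusion.

(* The unfolding [unjump t] replaces every jump t[x/u] by the
   meta-level substitution t{x/u}, mapping lambda-j terms to lambda-terms.  A
   lambda-j step is simulated on unfoldings by parallel beta-reduction, the
   axioms of o (hence of CS) do not change unfoldings, every term lambda-j
   reduces to its unfolding, and parallel beta-reduction is in turn simulated by
   lambda-j.  Confluence of parallel beta-reduction (Tait--Martin-Loef, via the
   complete development [rho]) thus transfers to lambda-j/CS and lambda-j/o.

   We use non-idempotent intersection types: judgements [typ G t s n m]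
   where n counts the typing rules and m charges 3^|M| for each jump whose
   argument is typed with the multiset M.  Typings are invariant under the
   equations of o, and each lambda-j step strictly decreases (n, m)
   lexicographically, so typable terms are lambda-j/o strongly normalising.
   Conversely every beta-SN lambda-term is typable (induction on beta-reduction
   and the subterm order, using subject expansion for beta on lambda-terms).
   As CS-equivalence implies o-equivalence, PSN for lambda-j/CS follows. *)

Lemma ren_ext f g t : (forall n, f n = g n) -> ren f t = ren g t.
Proof.
  revert f g; induction t; intros f g H; simpl; f_equal; auto;
  try (apply IHt || apply IHt1); intros [|n]; simpl; auto.
Qed.

Lemma ren_ren f g t : ren f (ren g t) = ren (fun n => f (g n)) t.
Proof.
  revert f g; induction t; intros f g; simpl; f_equal; auto;
  try rewrite IHt; try rewrite IHt1; apply ren_ext; intros [|n]; reflexivity.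
Qed.

Lemma ren_id t : ren (fun n => n) t = t.
Proof.
  induction t; simpl; f_equal; auto;
  try (rewrite <- IHt at 2); try (rewrite <- IHt1 at 2); apply ren_ext; intros [|n]; reflexivity.
Qed.

Lemma subst_ext s r t : (forall n, s n = r n) -> subst s t = subst r t.
Proof.
  revert s r; induction t; intros s r H; simpl; f_equal; auto;
  try (apply IHt || apply IHt1); intros [|n]; simpl; auto; rewrite H; auto.
Qed.

Lemma ren_subst_var f t : ren f t = subst (fun n => Var (f n)) t.
Proof.
  revert f; induction t; intros f; simpl; f_equal; auto;
  try rewrite IHt; try rewrite IHt1; apply subst_ext; intros [|n]; reflexivity.
Qed.

Lemma subst_ren s f t : subst s (ren f t) = subst (fun n => s (f n)) t.
Proof.
  revert s f; induction t; intros s f; simpl; f_equal; auto;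
  try rewrite IHt; try rewrite IHt1; apply subst_ext; intros [|n]; reflexivity.
Qed.

Lemma ren_subst f s t : ren f (subst s t) = subst (fun n => ren f (s n)) t.
Proof.
  revert f s; induction t; intros f s; simpl; f_equal; auto;
  try rewrite IHt; try rewrite IHt1; apply subst_ext; intros [|n]; simpl; auto;
  unfold lift; rewrite !ren_ren; apply ren_ext; reflexivity.
Qed.

Lemma subst_subst s r t : subst s (subst r t) = subst (fun n => subst s (r n)) t.
Proof.
  revert s r; induction t; intros s r; simpl; f_equal; auto;
  try rewrite IHt; try rewrite IHt1; apply subst_ext; intros [|n]; simpl; auto;
  unfold lift; rewrite ren_subst, subst_ren; apply subst_ext; reflexivity.
Qed.

Lemma subst_id t : subst Var t = t.
Proof.
  rewrite <- (ren_id t) at 2. rewrite ren_subst_var. reflexivity.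
Qed.

Ltac asimpl := unfold lift, subst0, swap01 in *;
  repeat (rewrite ?ren_ren, ?subst_ren, ?ren_subst, ?subst_subst).

Lemma occ_subst_ext k s r t : occ k t = 0 -> (forall n, n <> k -> s n = r n) -> subst s t = subst r t.
Proof.
  revert k s r; induction t; intros k s r Ho H; simpl in *.
  - apply H. intro; subst. rewrite Nat.eqb_refl in Ho. discriminate.
  - f_equal. apply (IHt (S k)); auto. intros [|n] Hn; simpl; auto; rewrite H; auto.
  - f_equal; [apply (IHt1 k)|apply (IHt2 k)]; auto; lia.
  - f_equal; [apply (IHt1 (S k))|apply (IHt2 k)]; auto; try lia.
    intros [|n] Hn; simpl; auto; rewrite H; auto.
Qed.

Lemma occ_ren_ext k f g t : occ k t = 0 -> (forall n, n <> k -> f n = g n) -> ren f t = ren g t.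
Proof.
  intros. rewrite !ren_subst_var. apply (occ_subst_ext k); auto; intros; rewrite H0; auto.
Qed.

Lemma occ_ren_inj f k t : (forall a b, f a = f b -> a = b) -> occ (f k) (ren f t) = occ k t.
Proof.
  revert f k; induction t; intros f k Hf; simpl.
  - destruct (Nat.eqb_spec n k) as [->|Hne]; [rewrite Nat.eqb_refl; auto|].
    destruct (Nat.eqb_spec (f n) (f k)) as [E|]; auto. apply Hf in E; contradiction.
  - apply (IHt (upren f) (S k)). intros [|a] [|b]; simpl; intros; try discriminate; auto.
  - rewrite IHt1, IHt2; auto.
  - rewrite IHt2 by auto. f_equal. apply (IHt1 (upren f) (S k)). intros [|a] [|b]; simpl; intros; try discriminate; auto.
Qed.

Lemma occ_ren_notin f k t : (forall a, f a <> k) -> occ k (ren f t) = 0.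
Proof.
  revert f k; induction t; intros f k Hf; simpl.
  - destruct (Nat.eqb_spec (f n) k); auto. exfalso; eapply Hf; eauto.
  - apply IHt. intros [|a]; simpl; auto.
  - rewrite IHt1, IHt2; auto.
  - rewrite IHt1, IHt2; auto. intros [|a]; simpl; auto.
Qed.

Lemma occ_lift k t : occ (S k) (lift t) = occ k t.
Proof. apply occ_ren_inj. intros; lia. Qed.

Lemma occ_lift0 t : occ 0 (lift t) = 0.
Proof. apply occ_ren_notin. intros; lia. Qed.

Lemma occ_subst_single s k j t : (forall n, occ k (s n) = if Nat.eqb n j then 1 else 0) ->
  occ k (subst s t) = occ j t.
Proof.
  revert s k j; induction t; intros s k j Hs; simpl; auto.
  - apply IHt. intros [|n]; simpl; auto. rewrite occ_lift; auto.
  - rewrite (IHt2 s k j) by auto. f_equal. apply (IHt1 _ (S k) (S j)). intros [|n]; simpl; auto. rewrite occ_lift; auto.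
Qed.

Lemma occ0_lift_back t : occ 0 t = 0 -> t = lift (ren Nat.pred t).
Proof.
  intros H. unfold lift. rewrite ren_ren. rewrite <- (ren_id t) at 1.
  apply (occ_ren_ext 0); auto. intros [|n] Hn; simpl; auto; lia.
Qed.

Fixpoint skip (k : nat) (t : term) : term :=
  match t with
  | Var n => if Nat.leb n k then Var n else Var (S n)
  | Lam t => Lam (skip (S k) t)
  | App t u => App (skip k t) (skip k u)
  | Jmp t u => Jmp (skip (S k) t) (skip k u)
  end.

Lemma skip_part k t : part k t (skip k t) /\ occ (S k) (skip k t) = 0 /\ occ k (skip k t) = occ k t.
Proof.
  revert k; induction t; intros k; simpl.
  - case_eq (Nat.leb n k); intro E; [apply Nat.leb_le in E | apply Nat.leb_gt in E].
    + split; [|split].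
      * destruct (Nat.eq_dec n k); [subst; apply part_x | apply part_lt; lia].
      * simpl. destruct (Nat.eqb_spec n (S k)); [lia|auto].
      * reflexivity.
    + split; [|split].
      * apply part_gt; lia.
      * simpl. destruct (Nat.eqb_spec n k); [lia|auto].
      * unfold occ. rewrite (proj2 (Nat.eqb_neq (S n) k)) by lia; rewrite (proj2 (Nat.eqb_neq n k)) by lia; reflexivity.
  - destruct (IHt (S k)) as [A [B C]]. repeat split; auto. constructor; auto.
  - destruct (IHt1 k) as [A [B C]]; destruct (IHt2 k) as [A' [B' C']]. repeat split; try lia. constructor; auto.
  - destruct (IHt1 (S k)) as [A [B C]]; destruct (IHt2 k) as [A' [B' C']]. repeat split; try lia. constructor; auto.
Qed.

Lemma part_one k t : 1 <= occ k t -> exists t', part k t t' /\ occ (S k) t' = 1 /\ occ k t' + 1 = occ k t.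
Proof.
  revert k; induction t; intros k H; simpl in *.
  - destruct (Nat.eqb_spec n k); [subst|lia]. exists (Var (S k)). split; [apply part_y|]. cbn [occ].
    rewrite Nat.eqb_refl. rewrite (proj2 (Nat.eqb_neq (S k) k)) by lia. auto.
  - destruct (IHt (S k) H) as [t' [A [B C]]]. exists (Lam t'); repeat split; auto. constructor; auto.
  - destruct (le_lt_dec 1 (occ k t1)).
    + destruct (IHt1 k l) as [t' [A [B C]]]. destruct (skip_part k t2) as [A' [B' C']].
      exists (App t' (skip k t2)); simpl; repeat split; try lia. constructor; auto.
    + destruct (IHt2 k ltac:(lia)) as [t' [A [B C]]]. destruct (skip_part k t1) as [A' [B' C']].
      exists (App (skip k t1) t'); simpl; repeat split; try lia. constructor; auto.
  - destruct (le_lt_dec 1 (occ (S k) t1)).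
    + destruct (IHt1 (S k) l) as [t' [A [B C]]]. destruct (skip_part k t2) as [A' [B' C']].
      exists (Jmp t' (skip k t2)); simpl; repeat split; try lia. constructor; auto.
    + destruct (IHt2 k ltac:(lia)) as [t' [A [B C]]]. destruct (skip_part (S k) t1) as [A' [B' C']].
      exists (Jmp (skip (S k) t1) t'); simpl; repeat split; try lia. constructor; auto.
Qed.

Definition merge (k n : nat) : nat := if Nat.leb n k then n else Nat.pred n.

Lemma part_merge k t t' : part k t t' -> ren (merge k) t' = t.
Proof.
  unfold merge. induction 1; cbn [ren]; auto.
  - rewrite Nat.leb_refl; auto.
  - destruct (Nat.leb_spec (S k) k); [lia|]; auto.
  - destruct (Nat.leb_spec n k); [|lia]; auto.
  - destruct (Nat.leb_spec (S n) k); [lia|]; auto.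
  - f_equal. rewrite <- IHpart. apply ren_ext. intros [|m]; simpl; auto.
    destruct (Nat.leb_spec m k); auto. lia.
  - f_equal; auto.
  - f_equal; auto. rewrite <- IHpart1. apply ren_ext. intros [|m]; simpl; auto.
    destruct (Nat.leb_spec m k); auto. lia.
Qed.

Lemma part_occ k t t' : part k t t' -> occ k t' + occ (S k) t' = occ k t.
Proof.
  induction 1; cbn [occ]; try lia;
  repeat match goal with |- context [Nat.eqb ?p ?q] => destruct (Nat.eqb_spec p q) end; lia.
Qed.

Fixpoint unjump (t : term) : term :=
  match t with
  | Var n => Var n
  | Lam t => Lam (unjump t)
  | App t u => App (unjump t) (unjump u)
  | Jmp t u => subst0 (unjump u) (unjump t)
  end.

Lemma unjump_ren f t : unjump (ren f t) = ren f (unjump t).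
Proof.
  revert f; induction t; intros f; simpl; try rewrite IHt; try rewrite IHt1; try rewrite IHt2; auto.
  asimpl. apply subst_ext. intros [|n]; simpl; auto.
Qed.

Lemma unjump_subst s t : unjump (subst s t) = subst (fun n => unjump (s n)) (unjump t).
Proof.
  revert s; induction t; intros s; simpl; try rewrite IHt; try rewrite IHt1; try rewrite IHt2; auto.
  - f_equal. apply subst_ext. intros [|n]; simpl; auto. unfold lift. rewrite unjump_ren. reflexivity.
  - asimpl. apply subst_ext. intros [|n]; simpl; auto.
    unfold lift. rewrite unjump_ren. asimpl. rewrite <- (subst_id (unjump (s n))) at 2. apply subst_ext; reflexivity.
Qed.

Lemma unjump_subst0 u t : unjump (subst0 u t) = subst0 (unjump u) (unjump t).
Proof. unfold subst0. rewrite unjump_subst. apply subst_ext. intros [|n]; reflexivity. Qed.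

Fixpoint jumps_subst (L : list term) : nat -> term :=
  match L with
  | nil => Var
  | v :: L' => fun n => subst (jumps_subst L') (match n with 0 => unjump v | S m => Var m end)
  end.

Lemma unjump_wrapL h L : unjump (wrapL h L) = subst (jumps_subst L) (unjump h).
Proof.
  revert h; induction L; intros h; simpl.
  - rewrite subst_id; auto.
  - rewrite IHL. simpl. unfold subst0. rewrite subst_subst. apply subst_ext. intros [|n]; reflexivity.
Qed.

Lemma jumps_subst_shift L n : jumps_subst L (n + length L) = Var n.
Proof.
  revert n; induction L; intros n; simpl. f_equal; lia.
  replace (n + S (length L)) with (S (n + length L)) by lia. simpl. apply IHL.
Qed.

(* Parallel beta-reduction on (the lambda-fragment of) terms; jumps are only
   traversed, so it also makes sense on unfoldings. *)
Inductive par : term -> term -> Prop :=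
| par_var n : par (Var n) (Var n)
| par_lam t t' : par t t' -> par (Lam t) (Lam t')
| par_app t t' u u' : par t t' -> par u u' -> par (App t u) (App t' u')
| par_jmp t t' u u' : par t t' -> par u u' -> par (Jmp t u) (Jmp t' u')
| par_beta t t' u u' : par t t' -> par u u' -> par (App (Lam t) u) (subst0 u' t').

Lemma par_refl t : par t t.
Proof. induction t; constructor; auto. Qed.

Lemma par_ren f t t' : par t t' -> par (ren f t) (ren f t').
Proof.
  intros H; revert f; induction H; intros f; simpl; try constructor; auto.
  replace (ren f (subst0 u' t')) with (subst0 (ren f u') (ren (upren f) t')).
  - constructor; auto.
  - asimpl. apply subst_ext. intros [|n]; reflexivity.
Qed.

Lemma par_subst s r t t' : par t t' -> (forall n, par (s n) (r n)) -> par (subst s t) (subst r t').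
Proof.
  intros H; revert s r; induction H; intros s r Hs; simpl; try constructor; auto;
  try (first [apply IHpar | apply IHpar1]; intros [|m]; simpl; [constructor| apply par_ren; auto]).
  replace (subst r (subst0 u' t')) with (subst0 (subst r u') (subst (up_sub r) t')).
  - constructor; auto. apply IHpar1. intros [|m]; simpl; [constructor| apply par_ren; auto].
  - asimpl. apply subst_ext. intros [|n]; simpl; auto. asimpl.
    rewrite <- (subst_id (r n)) at 2. apply subst_ext; reflexivity.
Qed.

(* Complete development: the target of the triangle property. *)
Fixpoint rho (t : term) : term :=
  match t with
  | Var n => Var n
  | Lam t => Lam (rho t)
  | App (Lam a) b => subst0 (rho b) (rho a)
  | App a b => App (rho a) (rho b)
  | Jmp a b => Jmp (rho a) (rho b)
  end.

Lemma par_rho t t' : par t t' -> par t' (rho t).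
Proof.
  induction 1; simpl; try constructor; auto.
  - destruct t; try (constructor; auto).
    inversion H; subst. simpl in IHpar1. inversion IHpar1; subst.
    constructor; auto.
  - apply par_subst; auto. intros [|n]; simpl; auto; constructor.
Qed.

Definition par_star := clos_refl_trans term par.

Lemma strip t u v : par t u -> par_star t v -> exists w, par_star u w /\ par v w.
Proof.
  intros H1 H2. revert u H1. induction H2; intros u0 H1.
  - exists (rho x). split. apply rt_step. apply par_rho; auto. apply par_rho; auto.
  - exists u0. split. apply rt_refl. auto.
  - destruct (IHclos_refl_trans1 _ H1) as [w1 [A1 B1]].
    destruct (IHclos_refl_trans2 _ B1) as [w2 [A2 B2]].
    exists w2; split; auto. eapply rt_trans; eauto.
Qed.

Lemma par_star_confluent t u v : par_star t u -> par_star t v -> exists w, par_star u w /\ par_star v w.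
Proof.
  intros H1. revert v. induction H1; intros v H2.
  - destruct (strip _ _ _ H H2) as [w [A B]]. exists w; split; auto. apply rt_step; auto.
  - exists v; split; auto. apply rt_refl.
  - destruct (IHclos_refl_trans1 _ H2) as [w1 [A1 B1]].
    destruct (IHclos_refl_trans2 _ A1) as [w2 [A2 B2]].
    exists w2; split; auto. eapply rt_trans; eauto.
Qed.

Lemma par_star_lam t t' : par_star t t' -> par_star (Lam t) (Lam t').
Proof. induction 1; [apply rt_step; constructor; auto; apply par_refl|apply rt_refl|eapply rt_trans; eauto]. Qed.

Lemma par_star_appl t t' u : par_star t t' -> par_star (App t u) (App t' u).
Proof. induction 1; [apply rt_step; constructor; auto; apply par_refl|apply rt_refl|eapply rt_trans; eauto]. Qed.

Lemma par_star_appr t u u' : par_star u u' -> par_star (App t u) (App t u').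
Proof. induction 1; [apply rt_step; constructor; auto; apply par_refl|apply rt_refl|eapply rt_trans; eauto]. Qed.

Lemma par_star_subst0l t t' u : par_star t t' -> par_star (subst0 u t) (subst0 u t').
Proof. induction 1; [apply rt_step; apply par_subst; auto; intros [|n]; apply par_refl|apply rt_refl|eapply rt_trans; eauto]. Qed.

Lemma par_star_subst0r t u u' : par_star u u' -> par_star (subst0 u t) (subst0 u' t).
Proof. induction 1; [apply rt_step; apply par_subst; [apply par_refl|]; intros [|n]; auto; apply par_refl|apply rt_refl|eapply rt_trans; eauto]. Qed.

Definition lj_star : term -> term -> Prop := clos_refl_trans term lj_step.

Lemma lj_star_lam t t' : lj_star t t' -> lj_star (Lam t) (Lam t').
Proof. induction 1; [apply rt_step; apply ctx_lam; auto|apply rt_refl|eapply rt_trans; eauto]. Qed.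
Lemma lj_star_appl t t' u : lj_star t t' -> lj_star (App t u) (App t' u).
Proof. induction 1; [apply rt_step; apply ctx_appl; auto|apply rt_refl|eapply rt_trans; eauto]. Qed.
Lemma lj_star_appr t u u' : lj_star u u' -> lj_star (App t u) (App t u').
Proof. induction 1; [apply rt_step; apply ctx_appr; auto|apply rt_refl|eapply rt_trans; eauto]. Qed.
Lemma lj_star_jmpl t t' u : lj_star t t' -> lj_star (Jmp t u) (Jmp t' u).
Proof. induction 1; [apply rt_step; apply ctx_jmpl; auto|apply rt_refl|eapply rt_trans; eauto]. Qed.
Lemma lj_star_jmpr t u u' : lj_star u u' -> lj_star (Jmp t u) (Jmp t u').
Proof. induction 1; [apply rt_step; apply ctx_jmpr; auto|apply rt_refl|eapply rt_trans; eauto]. Qed.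
Lemma lj_star_app t t' u u' : lj_star t t' -> lj_star u u' -> lj_star (App t u) (App t' u').
Proof. intros; eapply rt_trans; [apply lj_star_appl|apply lj_star_appr]; eauto. Qed.
Lemma lj_star_jmp t t' u u' : lj_star t t' -> lj_star u u' -> lj_star (Jmp t u) (Jmp t' u').
Proof. intros; eapply rt_trans; [apply lj_star_jmpl|apply lj_star_jmpr]; eauto. Qed.

Lemma subst0_unused u t : occ 0 t = 0 -> subst0 u t = ren Nat.pred t.
Proof.
  intros H. rewrite ren_subst_var. apply (occ_subst_ext 0); auto.
  intros [|m]; simpl; auto; lia.
Qed.

Lemma subst0_merge u t : subst0 u (subst0 (lift u) t) = subst0 u (ren (merge 0) t).
Proof.
  unfold subst0, lift. rewrite subst_ren, subst_subst.
  apply subst_ext. intros [|[|m]]; simpl; auto. rewrite subst_ren. apply subst_id.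
Qed.

Lemma occ_subst0_lift u t : occ 0 (subst0 (lift u) t) = occ 1 t.
Proof.
  unfold subst0. apply occ_subst_single. intros [|[|m]]; simpl; auto. apply occ_lift0.
Qed.

(* A jump reduces to the corresponding substitution, by induction on the number
   of occurrences: rules w and d for 0 and 1 occurrences, c to split off one
   occurrence otherwise. *)
Lemma jump_to_subst a b : lj_star (Jmp a b) (subst0 b a).
Proof.
  remember (occ 0 a) as n eqn:Hn. revert a b Hn.
  induction n as [n IH] using lt_wf_ind. intros a b Hn.
  destruct n as [|[|n]].
  - eapply rt_trans; [apply rt_step, ctx_root, r_w; auto|].
    rewrite subst0_unused by auto. apply rt_refl.
  - apply rt_step, ctx_root, r_d; auto.
  - destruct (part_one 0 a ltac:(lia)) as [a' [P [O1 O2]]].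
    eapply rt_trans; [apply rt_step, ctx_root, (r_c a b a'); auto; lia|].
    eapply rt_trans; [apply lj_star_jmpl, (IH (S n)); lia|].
    eapply rt_trans; [apply (IH 1); [lia|rewrite occ_subst0_lift; auto]|].
    rewrite subst0_merge, (part_merge 0 a a' P). apply rt_refl.
Qed.

Lemma lj_star_unjump t : lj_star t (unjump t).
Proof.
  induction t; simpl; try apply rt_refl.
  - apply lj_star_lam; auto.
  - apply lj_star_app; auto.
  - eapply rt_trans. apply lj_star_jmp; eauto. eapply jump_to_subst; eauto.
Qed.

Lemma par_lj_star t u : par t u -> lj_star t u.
Proof.
  induction 1; try apply rt_refl.
  - apply lj_star_lam; auto.
  - apply lj_star_app; auto.
  - apply lj_star_jmp; auto.
  - eapply rt_trans. apply lj_star_app; [apply lj_star_lam|]; eauto.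
    eapply rt_trans. apply rt_step. apply ctx_root. apply (r_dB t' nil u').
    simpl. rewrite (ren_ext _ (fun n => n)), ren_id by (intros; lia).
    eapply jump_to_subst; eauto.
Qed.

Lemma par_star_lj_star t u : par_star t u -> lj_star t u.
Proof. induction 1; [apply par_lj_star; auto|apply rt_refl|eapply rt_trans; eauto]. Qed.

Lemma root_unjump t u : lj_root t u -> par_star (unjump t) (unjump u).
Proof.
  destruct 1.
  - simpl. rewrite !unjump_wrapL. simpl. apply rt_step.
    replace (subst (jumps_subst L) (subst0 (unjump (ren (fun n => n + length L) u)) (unjump t)))
      with (subst0 (unjump u) (subst (up_sub (jumps_subst L)) (unjump t))).
    + constructor; apply par_refl.
    + rewrite unjump_ren. unfold subst0. rewrite !subst_subst. apply subst_ext. intros [|n]; simpl.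
      * rewrite subst_ren. rewrite <- (subst_id (unjump u)) at 1. apply subst_ext. intros m. rewrite jumps_subst_shift; auto.
      * unfold lift. rewrite subst_ren. simpl. apply subst_id.
  - simpl. rewrite (occ0_lift_back t) at 1 by auto. unfold lift. rewrite unjump_ren.
    unfold subst0. rewrite subst_ren. simpl. rewrite subst_id. apply rt_refl.
  - simpl. rewrite unjump_subst0. apply rt_refl.
  - simpl. rewrite <- (part_merge 0 t t') by auto.
    unfold lift. rewrite !unjump_ren, <- subst0_merge. apply rt_refl.
Qed.

Lemma step_unjump t u : lj_step t u -> par_star (unjump t) (unjump u).
Proof.
  induction 1; simpl.
  - apply root_unjump; auto.
  - apply par_star_lam; auto.
  - apply par_star_appl; auto.
  - apply par_star_appr; auto.
  - apply par_star_subst0l; auto.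
  - apply par_star_subst0r; auto.
Qed.

Lemma oax_unjump t u : o_ax t u -> unjump t = unjump u.
Proof.
  destruct 1; simpl; unfold lift, swap01; rewrite ?unjump_ren; unfold subst0; simpl.
  - rewrite !subst_subst, !subst_ren. apply subst_ext. intros [|[|n]]; simpl; auto.
    + rewrite subst_ren. simpl. rewrite subst_id; auto.
    + rewrite subst_ren. simpl. rewrite subst_id; auto.
  - f_equal. rewrite !subst_ren. apply subst_ext. intros [|[|n]]; simpl; auto.
  - f_equal. rewrite subst_ren. simpl. rewrite subst_id; auto.
Qed.

Lemma ctx_oax_unjump t u : ctx o_ax t u -> unjump t = unjump u.
Proof. induction 1; simpl; try congruence. apply oax_unjump; auto. Qed.

Lemma equiv_o_unjump t u : equiv_o t u -> unjump t = unjump u.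
Proof. induction 1; try congruence. apply ctx_oax_unjump; auto. Qed.

Lemma csax_oax t u : cs_ax t u -> o_ax t u.
Proof. destruct 1; constructor. Qed.

Lemma ctx_mono (R R' : term -> term -> Prop) :
  (forall a b, R a b -> R' a b) -> forall a b, ctx R a b -> ctx R' a b.
Proof. intros H a b; induction 1; [apply ctx_root; auto|constructor 2|constructor 3|constructor 4|constructor 5|constructor 6]; auto. Qed.

Lemma equiv_CS_o t u : equiv_CS t u -> equiv_o t u.
Proof.
  induction 1; [apply rst_step; eapply ctx_mono; [apply csax_oax|]; auto|apply rst_refl|apply rst_sym; auto|eapply rst_trans; eauto].
Qed.

Lemma confluence_gen (E : term -> term -> Prop) :
  (forall t, E t t) -> (forall t u, E t u -> unjump t = unjump u) -> confluent (lj_mod E).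
Proof.
  intros Hr HU.
  assert (Hm : forall t u, clos_refl_trans term (lj_mod E) t u -> par_star (unjump t) (unjump u)).
  { induction 1; [|apply rt_refl|eapply rt_trans; eauto].
    destruct H as [t' [u' [A [B C]]]]. rewrite (HU _ _ A), <- (HU _ _ C). apply step_unjump; auto. }
  assert (Hl : forall t u, lj_star t u -> clos_refl_trans term (lj_mod E) t u).
  { induction 1; [apply rt_step; exists x, y; auto|apply rt_refl|eapply rt_trans; eauto]. }
  intros t u1 u2 H1 H2.
  destruct (par_star_confluent _ _ _ (Hm _ _ H1) (Hm _ _ H2)) as [v [A B]].
  exists v; split; apply Hl; (eapply rt_trans; [apply lj_star_unjump|apply par_star_lj_star; auto]).
Qed.

Lemma conf_CS : confluent (lj_mod equiv_CS).
Proof. apply confluence_gen. intros; apply rst_refl. intros; apply equiv_o_unjump, equiv_CS_o; auto. Qed.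

Lemma conf_o : confluent (lj_mod equiv_o).
Proof. apply confluence_gen. intros; apply rst_refl. apply equiv_o_unjump. Qed.

(* Non-idempotent intersection types: a type is an atom or M -> s with M a
   multiset (list up to permutation) of types. *)
Inductive ty : Type := TAt : nat -> ty | Arr : list ty -> ty -> ty.

Lemma ty_eq_dec : forall a b : ty, {a = b} + {a <> b}.
Proof.
  fix IH 1. intros [n|M s] [m|N t].
  - destruct (Nat.eq_dec n m); [left; congruence|right; congruence].
  - right; congruence.
  - right; congruence.
  - destruct (IH s t); [|right; congruence].
    assert (HL : {M = N} + {M <> N}).
    { revert N. induction M as [|x M IHM]; intros [|y N].
      - left; auto.
      - right; congruence.
      - right; congruence.
      - destruct (IH x y); [|right; congruence].
        destruct (IHM N); [left; congruence|right; congruence]. }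
    destruct HL; [left; congruence|right; congruence].
Defined.

Definition cnt (L : list ty) (x : ty) : nat := count_occ ty_eq_dec L x.

Lemma cnt_app L1 L2 x : cnt (L1 ++ L2) x = cnt L1 x + cnt L2 x.
Proof. apply count_occ_app. Qed.

Lemma cnt_cons a L x : cnt (a :: L) x = (if ty_eq_dec a x then 1 else 0) + cnt L x.
Proof. unfold cnt; simpl. destruct (ty_eq_dec a x); auto. Qed.

Definition meq (L L' : list ty) := forall x, cnt L x = cnt L' x.

Lemma meq_perm L L' : meq L L' -> Permutation L L'.
Proof. intros H. apply (Permutation_count_occ ty_eq_dec). apply H. Qed.

Lemma meq_nil L : meq L nil -> L = nil.
Proof. intros H. apply meq_perm in H. apply Permutation_nil; apply Permutation_sym; auto. Qed.

Lemma meq_length L L' : meq L L' -> length L = length L'.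
Proof. intros H; apply Permutation_length, meq_perm; auto. Qed.

Definition env := nat -> list ty.

Definition eempty : env := fun _ => nil.

Definition eadd (G D : env) : env := fun n => G n ++ D n.

Definition scons (M : list ty) (G : env) : env := fun n => match n with 0 => M | S k => G k end.

Definition etail (G : env) : env := fun n => G (S n).

Definition esingle (k : nat) (L : list ty) : env := fun n => if Nat.eqb n k then L else nil.

Definition eeq (G D : env) := forall n x, cnt (G n) x = cnt (D n) x.

Definition sub (L M : list ty) := forall x, cnt L x <= cnt M x.

(* The types an argument is checked against: M itself, or one arbitrary type
   when M is empty, so that erasable arguments are still typed. *)
Definition sharp (M : list ty) (t : ty) : list ty := match M with nil => t :: nil | _ => M end.

(* [typ G t s n m]: t has type s in G, with n the number of rules used and m
   the jump weight, each jump whose bound variable is declared with M adding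
   3^|M|; a binder may declare more types (M) than its body uses (G1 0).
   [mtyp G u L n m]: u has every type of the multiset L, the environments and
   measures being summed. *)
Inductive typ : env -> term -> ty -> nat -> nat -> Prop :=
| T_var G x s : eeq G (esingle x (s :: nil)) -> typ G (Var x) s 1 0
| T_lam G G1 t M s n m : typ G1 t s n m -> sub (G1 0) M -> eeq G (etail G1) ->
    typ G (Lam t) (Arr M s) (S n) m
| T_app G G1 D t u M s n1 m1 n2 m2 tau : typ G1 t (Arr M s) n1 m1 -> mtyp D u (sharp M tau) n2 m2 ->
    eeq G (eadd G1 D) -> typ G (App t u) s (S (n1 + n2)) (m1 + m2)
| T_jmp G G1 D t u M s n1 m1 n2 m2 tau : typ G1 t s n1 m1 -> sub (G1 0) M ->
    mtyp D u (sharp M tau) n2 m2 -> eeq G (eadd (etail G1) D) ->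
    typ G (Jmp t u) s (n1 + n2) (m1 + m2 + 3 ^ length M)
with mtyp : env -> term -> list ty -> nat -> nat -> Prop :=
| M_nil G u : eeq G eempty -> mtyp G u nil 0 0
| M_cons G G1 G2 u s L n1 m1 n2 m2 : typ G1 u s n1 m1 -> mtyp G2 u L n2 m2 -> eeq G (eadd G1 G2) ->
    mtyp G u (s :: L) (n1 + n2) (m1 + m2).

Ltac envunf := unfold eeq, eadd, scons, etail, esingle, eempty, meq, sub in *.

Lemma eeq_refl G : eeq G G.
Proof. envunf; auto. Qed.

Lemma eeq_sym G D : eeq G D -> eeq D G.
Proof. envunf; intros; symmetry; auto. Qed.

Lemma eeq_trans G D E : eeq G D -> eeq D E -> eeq G E.
Proof. envunf; intros; etransitivity; eauto. Qed.

Lemma inv_var G x s n m : typ G (Var x) s n m -> n = 1 /\ m = 0 /\ eeq G (esingle x (s :: nil)).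
Proof. intros H; inversion H; subst; auto. Qed.

Lemma inv_lam G t s n m : typ G (Lam t) s n m ->
  exists G1 M s' n', s = Arr M s' /\ n = S n' /\ typ G1 t s' n' m /\ sub (G1 0) M /\ eeq G (etail G1).
Proof. intros H; inversion H; subst. exists G1, M, s0, n0; auto. Qed.

Lemma inv_app G t u s n m : typ G (App t u) s n m ->
  exists G1 D M n1 m1 n2 m2 tau, n = S (n1 + n2) /\ m = m1 + m2 /\ typ G1 t (Arr M s) n1 m1 /\
    mtyp D u (sharp M tau) n2 m2 /\ eeq G (eadd G1 D).
Proof. intros H; inversion H; subst. exists G1, D, M, n1, m1, n2, m2, tau; auto. Qed.

Lemma inv_jmp G t u s n m : typ G (Jmp t u) s n m ->
  exists G1 D M n1 m1 n2 m2 tau, n = n1 + n2 /\ m = m1 + m2 + 3 ^ length M /\ typ G1 t s n1 m1 /\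
    sub (G1 0) M /\ mtyp D u (sharp M tau) n2 m2 /\ eeq G (eadd (etail G1) D).
Proof. intros H; inversion H; subst. exists G1, D, M, n1, m1, n2, m2, tau; auto 10. Qed.

Lemma typ_eeq G G' t s n m : typ G t s n m -> eeq G G' -> typ G' t s n m.
Proof.
  intros H E; inversion H; subst.
  - constructor. eapply eeq_trans; [apply eeq_sym|]; eauto.
  - econstructor; eauto. eapply eeq_trans; [apply eeq_sym|]; eauto.
  - econstructor; eauto. eapply eeq_trans; [apply eeq_sym|]; eauto.
  - econstructor; eauto. eapply eeq_trans; [apply eeq_sym|]; eauto.
Qed.

Lemma mtyp_eeq G G' t L n m : mtyp G t L n m -> eeq G G' -> mtyp G' t L n m.
Proof.
  intros H E; inversion H; subst.
  - constructor. eapply eeq_trans; [apply eeq_sym|]; eauto.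
  - econstructor; eauto. eapply eeq_trans; [apply eeq_sym|]; eauto.
Qed.

Lemma typ_size G t s n m : typ G t s n m -> 1 <= n.
Proof.
  revert G s n m; induction t; intros G s nn mm H.
  - apply inv_var in H; lia.
  - apply inv_lam in H; destruct H as [? [? [? [? [? [? ?]]]]]]; lia.
  - apply inv_app in H; destruct H as [? [? [? [? [? [? [? [? [? ?]]]]]]]]]; lia.
  - apply inv_jmp in H; destruct H as [G1 [D1 [M1 [n1 [m1 [n2 [m2 [tau [Hn [Hm [H Hr]]]]]]]]]]]. apply IHt1 in H; lia.
Qed.

Lemma inv_mcons G u s L n m : mtyp G u (s :: L) n m -> exists G1 G2 n1 m1 n2 m2,
  typ G1 u s n1 m1 /\ mtyp G2 u L n2 m2 /\ eeq G (eadd G1 G2) /\ n = n1 + n2 /\ m = m1 + m2.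
Proof. intros H; inversion H; subst. exists G1, G2, n1, m1, n2, m2; auto. Qed.

Lemma mtyp_nil_inv G u n m : mtyp G u nil n m -> eeq G eempty /\ n = 0 /\ m = 0.
Proof. intros H; inversion H; subst; auto. Qed.

Lemma mtyp_single G u s n m : mtyp G u (s :: nil) n m <-> typ G u s n m.
Proof.
  split; intros H.
  - apply inv_mcons in H. destruct H as [G1 [G2 [n1 [m1 [n2 [m2 [A [B [C [-> ->]]]]]]]]]].
    apply mtyp_nil_inv in B. destruct B as [B [-> ->]]. rewrite !Nat.add_0_r. eapply typ_eeq; eauto.
    envunf. intros k x. rewrite C, cnt_app, B. simpl. lia.
  - replace n with (n + 0) by lia; replace m with (m + 0) by lia. econstructor; eauto.
    constructor. apply eeq_refl. envunf. intros; rewrite cnt_app; simpl; lia.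
Qed.

Lemma mtyp_app G1 G2 u L1 L2 n1 m1 n2 m2 : mtyp G1 u L1 n1 m1 -> mtyp G2 u L2 n2 m2 ->
  mtyp (eadd G1 G2) u (L1 ++ L2) (n1 + n2) (m1 + m2).
Proof.
  revert G1 n1 m1; induction L1; intros G1 n1 m1 H1 H2; simpl.
  - apply mtyp_nil_inv in H1. destruct H1 as [E [-> ->]]. eapply mtyp_eeq; eauto.
    envunf; intros; rewrite cnt_app, E; simpl; auto.
  - apply inv_mcons in H1. destruct H1 as [A [B [a1 [b1 [a2 [b2 [HA [HB [HE [-> ->]]]]]]]]]].
    rewrite <- !Nat.add_assoc. econstructor; eauto. envunf; intros; rewrite !cnt_app, HE, cnt_app; lia.
Qed.

Lemma mtyp_split G u L1 L2 n m : mtyp G u (L1 ++ L2) n m ->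
  exists G1 G2 n1 m1 n2 m2, mtyp G1 u L1 n1 m1 /\ mtyp G2 u L2 n2 m2 /\ eeq G (eadd G1 G2) /\
    n = n1 + n2 /\ m = m1 + m2.
Proof.
  revert G n m; induction L1; intros G n m H; simpl in H.
  - exists eempty, G, 0, 0, n, m. repeat split; auto. constructor; apply eeq_refl.
  - apply inv_mcons in H. destruct H as [G1 [G2 [n1 [m1 [n2 [m2 [T [H [HG [-> ->]]]]]]]]]].
    destruct (IHL1 _ _ _ H) as [A [B [a1 [b1 [a2 [b2 [HA [HB [HE [-> ->]]]]]]]]]].
    exists (eadd G1 A), B, (n1 + a1), (m1 + b1), a2, b2. repeat split; try lia.
    + econstructor; eauto. apply eeq_refl.
    + auto.
    + envunf; intros. rewrite HG, !cnt_app, HE, cnt_app. lia.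
Qed.

Lemma mtyp_perm G u L L' n m : mtyp G u L n m -> Permutation L L' -> mtyp G u L' n m.
Proof.
  intros H P. revert G n m H. induction P; intros G n m H; auto.
  - apply inv_mcons in H. destruct H as [G1 [G2 [n1 [m1 [n2 [m2 [T [H [HG [-> ->]]]]]]]]]].
    econstructor; eauto.
  - apply inv_mcons in H. destruct H as [G1 [G2 [n1 [m1 [n2 [m2 [T [H [HG [-> ->]]]]]]]]]].
    apply inv_mcons in H. destruct H as [G3 [G4 [n3 [m3 [n4 [m4 [T' [H [HG' [-> ->]]]]]]]]]].
    replace (n1 + (n3 + n4)) with (n3 + (n1 + n4)) by lia.
    replace (m1 + (m3 + m4)) with (m3 + (m1 + m4)) by lia.
    econstructor; eauto. econstructor; eauto. apply eeq_refl.
    envunf; intros; rewrite HG, !cnt_app, HG', cnt_app; lia.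
Qed.

Lemma mtyp_meq G u L L' n m : mtyp G u L n m -> meq L L' -> mtyp G u L' n m.
Proof. intros; eapply mtyp_perm; eauto; apply meq_perm; auto. Qed.

Lemma mtyp_size G u L n m : mtyp G u L n m -> length L <= n.
Proof.
  revert G n m; induction L; intros G n m H; simpl; [lia|].
  apply inv_mcons in H. destruct H as [G1 [G2 [n1 [m1 [n2 [m2 [T [H [HG [-> ->]]]]]]]]]].
  apply typ_size in T. apply IHL in H. lia.
Qed.

(* Renaming.  Given the preimages [pre m] of a renaming f, f acts on
   environments by collecting at m the multisets of all indices sent to m. *)
Definition renv (pre : nat -> list nat) (G : env) : env := fun m => concat (map G (pre m)).

Definition preimage_spec (f : nat -> nat) (pre : nat -> list nat) :=
  forall m, NoDup (pre m) /\ forall k, In k (pre m) <-> f k = m.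

Lemma cnt_concat (G : env) l x : cnt (concat (map G l)) x = list_sum (map (fun j => cnt (G j) x) l).
Proof. induction l; simpl; auto. rewrite cnt_app, IHl; auto. Qed.

Lemma renv_eeq pre G G' : eeq G G' -> eeq (renv pre G) (renv pre G').
Proof.
  unfold eeq, renv; intros H m x. rewrite !cnt_concat. induction (pre m); simpl; auto.
Qed.

Lemma renv_add pre G D : eeq (renv pre (eadd G D)) (eadd (renv pre G) (renv pre D)).
Proof.
  unfold eeq, renv, eadd; intros m x. rewrite cnt_app, !cnt_concat. induction (pre m); simpl; auto.
  rewrite cnt_app; lia.
Qed.

Lemma renv_empty pre : eeq (renv pre eempty) eempty.
Proof.
  unfold eeq, renv, eempty; intros m x. rewrite !cnt_concat. induction (pre m); simpl; auto.
Qed.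

Lemma list_sum_single l x c : NoDup l ->
  list_sum (map (fun j => if Nat.eqb j x then c else 0) l) = if in_dec Nat.eq_dec x l then c else 0.
Proof.
  induction l; cbn [map]; intros ND; auto. inversion ND; subst.
  change (list_sum (?a :: ?r)) with (a + list_sum r). rewrite IHl; auto. destruct (Nat.eqb_spec a x) as [<-|Hne].
  - destruct (in_dec Nat.eq_dec a l) as [I|NI]; [contradiction|].
    destruct (in_dec Nat.eq_dec a (a::l)) as [I2|N]; [lia| exfalso; apply N; left; auto].
  - destruct (in_dec Nat.eq_dec x l) as [I|NI]; destruct (in_dec Nat.eq_dec x (a::l)) as [I'|NI']; try lia.
    + exfalso; apply NI'; right; auto.
    + destruct I' as [E|I']; [congruence|contradiction].
Qed.

Lemma renv_single f pre x L : preimage_spec f pre -> eeq (renv pre (esingle x L)) (esingle (f x) L).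
Proof.
  unfold eeq, renv, esingle; intros HP m y. rewrite cnt_concat.
  destruct (HP m) as [ND HI].
  replace (map (fun j => cnt (if Nat.eqb j x then L else nil) y) (pre m))
    with (map (fun j => if Nat.eqb j x then cnt L y else 0) (pre m)).
  2:{ apply map_ext. intros j. destruct (Nat.eqb j x); auto. }
  rewrite list_sum_single; auto.
  destruct (in_dec Nat.eq_dec x (pre m)) as [I|I].
  - apply HI in I. subst. rewrite Nat.eqb_refl; auto.
  - destruct (Nat.eqb_spec m (f x)); auto. subst. exfalso; apply I, HI; auto.
Qed.

Definition pre_up (pre : nat -> list nat) : nat -> list nat :=
  fun m => match m with 0 => 0 :: nil | S m => map S (pre m) end.

Lemma preimage_spec_up f pre : preimage_spec f pre -> preimage_spec (upren f) (pre_up pre).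
Proof.
  intros HP [|m]; simpl.
  - split. constructor; auto; constructor. intros [|k]; simpl; split; intros H; auto; try discriminate.
    destruct H; [discriminate|contradiction].
  - destruct (HP m) as [ND HI]. split.
    + apply FinFun.Injective_map_NoDup; auto. intros a b; congruence.
    + intros [|k]; simpl; split; intros H.
      * apply in_map_iff in H. destruct H as [? [? ?]]; discriminate.
      * discriminate.
      * apply in_map_iff in H. destruct H as [j [E I]]. injection E; intros; subst. apply HI in I; congruence.
      * apply in_map_iff. exists k. split; auto. apply HI. congruence.
Qed.

Lemma renv_up_0 pre G x : cnt (renv (pre_up pre) G 0) x = cnt (G 0) x.
Proof. unfold renv, pre_up; simpl; rewrite cnt_app; simpl; lia. Qed.

Lemma renv_up_tail pre G : eeq (etail (renv (pre_up pre) G)) (renv pre (etail G)).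
Proof. unfold eeq, etail, renv, pre_up; intros m x. rewrite map_map. reflexivity. Qed.

Lemma mtyp_map (u u' : term) (F : env -> env) :
  (forall G1 G2, eeq (F (eadd G1 G2)) (eadd (F G1) (F G2))) -> eeq (F eempty) eempty ->
  (forall G G', eeq G G' -> eeq (F G) (F G')) ->
  (forall G s n m, typ G u s n m -> typ (F G) u' s n m) ->
  forall L G n m, mtyp G u L n m -> mtyp (F G) u' L n m.
Proof.
  intros H1 H2 H3 H4. induction L; intros G n m H.
  - apply mtyp_nil_inv in H. destruct H as [E [-> ->]]. constructor. eapply eeq_trans; [apply H3; eauto|auto].
  - apply inv_mcons in H. destruct H as [G1 [G2 [n1 [m1 [n2 [m2 [T [H [HG [-> ->]]]]]]]]]].
    econstructor; eauto. eapply eeq_trans; [apply H3; eauto|auto].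
Qed.

Lemma typ_ren t : forall G s n m f pre, typ G t s n m -> preimage_spec f pre -> typ (renv pre G) (ren f t) s n m.
Proof.
  induction t; intros G s nn mm f pre H HP; simpl.
  - apply inv_var in H. destruct H as [-> [-> E]]. constructor.
    eapply eeq_trans; [apply renv_eeq; eauto|apply renv_single; auto].
  - apply inv_lam in H. destruct H as [G1 [M [s' [n' [-> [-> [T [HM HE]]]]]]]].
    econstructor. apply (IHt _ _ _ _ (upren f) (pre_up pre) T). apply preimage_spec_up; auto.
    + intros x. rewrite renv_up_0. apply HM.
    + eapply eeq_trans; [apply renv_eeq; eauto|]. apply eeq_sym, renv_up_tail.
  - apply inv_app in H. destruct H as [G1 [D [M [n1 [m1 [n2 [m2 [tau [-> [-> [T [Hu HE]]]]]]]]]]]].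
    econstructor. apply (IHt1 _ _ _ _ f pre T HP).
    apply (mtyp_map t2 (ren f t2) (renv pre)); eauto. apply renv_add. apply renv_empty. apply renv_eeq.
    eapply eeq_trans; [apply renv_eeq; eauto|apply renv_add].
  - apply inv_jmp in H. destruct H as [G1 [D [M [n1 [m1 [n2 [m2 [tau [-> [-> [T [HM [Hu HE]]]]]]]]]]]]].
    econstructor. apply (IHt1 _ _ _ _ (upren f) (pre_up pre) T). apply preimage_spec_up; auto.
    + intros x. rewrite renv_up_0. apply HM.
    + apply (mtyp_map t2 (ren f t2) (renv pre)); eauto. apply renv_add. apply renv_empty. apply renv_eeq.
    + eapply eeq_trans; [apply renv_eeq; eauto|]. eapply eeq_trans; [apply renv_add|].
      intros k x. unfold eadd. rewrite !cnt_app. rewrite (renv_up_tail pre G1 k x). reflexivity.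
Qed.

Lemma mtyp_ren u G L n m f pre : mtyp G u L n m -> preimage_spec f pre -> mtyp (renv pre G) (ren f u) L n m.
Proof.
  intros H HP. revert H. apply (mtyp_map u (ren f u) (renv pre)).
  apply renv_add. apply renv_empty. apply renv_eeq. intros; apply typ_ren; auto.
Qed.

Definition ecomp (G : env) (f : nat -> nat) : env := fun k => G (f k).

Lemma mtyp_map_ecomp u u' f :
  (forall G s n m, typ G u s n m -> typ (ecomp G f) u' s n m) ->
  forall L G n m, mtyp G u L n m -> mtyp (ecomp G f) u' L n m.
Proof.
  apply (mtyp_map u u' (fun G => ecomp G f)).
  - intros; apply eeq_refl.
  - intros; apply eeq_refl.
  - unfold eeq, ecomp; intros; auto.
Qed.

Lemma typ_unren t : forall G s n m f, typ G (ren f t) s n m -> (forall a b, f a = f b -> a = b) ->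
  typ (ecomp G f) t s n m.
Proof.
  induction t; intros G s nn mm f H Hf; simpl in H.
  - apply inv_var in H. destruct H as [-> [-> E]]. constructor.
    unfold eeq, ecomp, esingle in *. intros k x. rewrite E.
    destruct (Nat.eqb_spec (f k) (f n)); destruct (Nat.eqb_spec k n); subst; auto; try congruence.
    apply Hf in e; contradiction.
  - apply inv_lam in H. destruct H as [G1 [M [s' [n' [-> [-> [T [HM HE]]]]]]]].
    econstructor. apply (IHt _ _ _ _ (upren f) T).
    + intros [|a] [|b]; simpl; intros; try discriminate; auto.
    + intros x. unfold ecomp; simpl. apply HM.
    + unfold eeq, ecomp, etail in *. intros k x. apply HE.
  - apply inv_app in H. destruct H as [G1 [D [M [n1 [m1 [n2 [m2 [tau [-> [-> [T [Hu HE]]]]]]]]]]]].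
    econstructor. apply (IHt1 _ _ _ _ f T Hf).
    + apply (mtyp_map_ecomp (ren f t2) t2 f); [intros; apply IHt2; auto|exact Hu].
    + unfold eeq, ecomp, eadd in *. intros k x. apply HE.
  - apply inv_jmp in H. destruct H as [G1 [D [M [n1 [m1 [n2 [m2 [tau [-> [-> [T [HM [Hu HE]]]]]]]]]]]]].
    econstructor. apply (IHt1 _ _ _ _ (upren f) T).
    + intros [|a] [|b]; simpl; intros; try discriminate; auto.
    + intros x. unfold ecomp; simpl. apply HM.
    + apply (mtyp_map_ecomp (ren f t2) t2 f); [intros; apply IHt2; auto|exact Hu].
    + unfold eeq, ecomp, eadd, etail in *. intros k x. apply HE.
Qed.

Lemma mtyp_unren u G L n m f : mtyp G (ren f u) L n m -> (forall a b, f a = f b -> a = b) ->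
  mtyp (ecomp G f) u L n m.
Proof.
  intros H Hf. revert H. apply mtyp_map_ecomp. intros; apply typ_unren; auto.
Qed.

Definition preS (m : nat) : list nat := match m with 0 => nil | S m' => m' :: nil end.

Lemma preimage_spec_S : preimage_spec S preS.
Proof.
  intros [|m]; simpl; split.
  - constructor.
  - intros k; split; intros H; [contradiction|discriminate].
  - constructor; auto; constructor.
  - intros k; split; intros H; [destruct H; [subst; auto|contradiction]|left; congruence].
Qed.

Lemma renv_preS G : eeq (renv preS G) (scons nil G).
Proof. intros [|m] x; unfold renv, scons; simpl; auto. rewrite cnt_app; simpl; lia. Qed.

Lemma mtyp_lift D u L n m : mtyp D u L n m -> mtyp (scons nil D) (lift u) L n m.
Proof.
  intros H. eapply mtyp_eeq. apply (mtyp_ren u D L n m S preS H preimage_spec_S). apply renv_preS.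
Qed.

Lemma cnt0_nil L : (forall x, cnt L x = 0) -> L = nil.
Proof. intros H. apply meq_nil. intros x; rewrite H; auto. Qed.

Lemma mtyp_support_of u :
  (forall G s n m k, typ G u s n m -> occ k u = 0 -> forall x, cnt (G k) x = 0) ->
  forall L G n m k, mtyp G u L n m -> occ k u = 0 -> forall x, cnt (G k) x = 0.
Proof.
  intros IH. induction L; intros G n m k H Ho x.
  - apply mtyp_nil_inv in H. destruct H as [E _]. rewrite E; auto.
  - apply inv_mcons in H. destruct H as [G1 [G2 [n1 [m1 [n2 [m2 [T [H [HG [-> ->]]]]]]]]]].
    rewrite HG. unfold eadd. rewrite cnt_app. rewrite (IH _ _ _ _ _ T Ho), (IHL _ _ _ _ H Ho); auto.
Qed.

Lemma typ_support t : forall G s n m k, typ G t s n m -> occ k t = 0 -> forall x, cnt (G k) x = 0.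
Proof.
  induction t; intros G s nn mm k H Ho x; simpl in Ho.
  - apply inv_var in H. destruct H as [_ [_ E]]. rewrite E. unfold esingle.
    destruct (Nat.eqb_spec k n); subst; auto. rewrite Nat.eqb_refl in Ho; discriminate.
  - apply inv_lam in H. destruct H as [G1 [M [s' [n' [-> [-> [T [HM HE]]]]]]]].
    rewrite HE. apply (IHt _ _ _ _ (S k) T Ho).
  - apply inv_app in H. destruct H as [G1 [D [M [n1 [m1 [n2 [m2 [tau [-> [-> [T [Hu HE]]]]]]]]]]]].
    rewrite HE. unfold eadd. rewrite cnt_app. rewrite (IHt1 _ _ _ _ k T), (mtyp_support_of t2 IHt2 _ _ _ _ k Hu); auto; lia.
  - apply inv_jmp in H. destruct H as [G1 [D [M [n1 [m1 [n2 [m2 [tau [-> [-> [T [HM [Hu HE]]]]]]]]]]]]].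
    rewrite HE. unfold eadd, etail. rewrite cnt_app. rewrite (IHt1 _ _ _ _ (S k) T), (mtyp_support_of t2 IHt2 _ _ _ _ k Hu); auto; lia.
Qed.

Lemma mtyp_support u L G n m k : mtyp G u L n m -> occ k u = 0 -> forall x, cnt (G k) x = 0.
Proof. apply mtyp_support_of. intros; eapply typ_support; eauto. Qed.

Lemma sharp_nonnil M tau : sharp M tau <> nil.
Proof. destruct M; simpl; discriminate. Qed.

Lemma mtyp_nonempty_of u :
  (forall G s n m k, typ G u s n m -> 1 <= occ k u -> G k <> nil) ->
  forall L G n m k, L <> nil -> mtyp G u L n m -> 1 <= occ k u -> G k <> nil.
Proof.
  intros IH. destruct L; intros G n m k HL H Ho; [congruence|].
  apply inv_mcons in H. destruct H as [G1 [G2 [n1 [m1 [n2 [m2 [T [H [HG [-> ->]]]]]]]]]].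
  intros E. apply (IH _ _ _ _ _ T Ho). apply cnt0_nil. intros x. specialize (HG k x). rewrite E in HG.
  unfold eadd in HG. rewrite cnt_app in HG. simpl in HG. lia.
Qed.

Lemma typ_nonempty t : forall G s n m k, typ G t s n m -> 1 <= occ k t -> G k <> nil.
Proof.
  induction t; intros G s nn mm k H Ho; simpl in Ho.
  - apply inv_var in H. destruct H as [_ [_ E]]. intros Z. specialize (E k s). rewrite Z in E.
    unfold esingle in E. destruct (Nat.eqb_spec k n); [|destruct (Nat.eqb_spec n k); lia]. rewrite cnt_cons in E.
    destruct (ty_eq_dec s s); simpl in E; [discriminate|congruence].
  - apply inv_lam in H. destruct H as [G1 [M [s' [n' [-> [-> [T [HM HE]]]]]]]].
    intros Z. apply (IHt _ _ _ _ (S k) T Ho). apply cnt0_nil. intros x. specialize (HE k x); unfold etail in HE; rewrite <- HE, Z; auto.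
  - apply inv_app in H. destruct H as [G1 [D [M [n1 [m1 [n2 [m2 [tau [-> [-> [T [Hu HE]]]]]]]]]]]].
    intros Z. destruct (le_lt_dec 1 (occ k t1)).
    + apply (IHt1 _ _ _ _ k T l). apply cnt0_nil. intros x. specialize (HE k x). rewrite Z in HE.
      unfold eadd in HE; rewrite cnt_app in HE; simpl in HE; lia.
    + apply (mtyp_nonempty_of t2 IHt2 _ _ _ _ k (sharp_nonnil M tau) Hu); [lia|]. apply cnt0_nil. intros x. specialize (HE k x). rewrite Z in HE.
      unfold eadd in HE; rewrite cnt_app in HE; simpl in HE; lia.
  - apply inv_jmp in H. destruct H as [G1 [D [M [n1 [m1 [n2 [m2 [tau [-> [-> [T [HM [Hu HE]]]]]]]]]]]]].
    intros Z. destruct (le_lt_dec 1 (occ (S k) t1)).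
    + apply (IHt1 _ _ _ _ (S k) T l). apply cnt0_nil. intros x. specialize (HE k x). rewrite Z in HE.
      unfold eadd, etail in HE; rewrite cnt_app in HE; simpl in HE; lia.
    + apply (mtyp_nonempty_of t2 IHt2 _ _ _ _ k (sharp_nonnil M tau) Hu); [lia|]. apply cnt0_nil. intros x. specialize (HE k x). rewrite Z in HE.
      unfold eadd in HE; rewrite cnt_app in HE; simpl in HE; lia.
Qed.

Lemma cnt_renv_single pre x L m y :
  NoDup (pre m) -> cnt (renv pre (esingle x L) m) y = if in_dec Nat.eq_dec x (pre m) then cnt L y else 0.
Proof.
  intros ND. unfold renv. rewrite cnt_concat.
  replace (map (fun j => cnt (esingle x L j) y) (pre m))
    with (map (fun j => if Nat.eqb j x then cnt L y else 0) (pre m)).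
  2:{ apply map_ext. intros j. unfold esingle. destruct (Nat.eqb j x); auto. }
  apply list_sum_single; auto.
Qed.

Definition subst_spec (s : nat -> term) k u (g : nat -> nat) (pre : nat -> list nat) :=
  s k = u /\ (forall n, n <> k -> s n = Var (g n)) /\
  forall m, NoDup (pre m) /\ forall j, In j (pre m) <-> (j <> k /\ g j = m).

Lemma subst_spec_up s k u g pre : subst_spec s k u g pre -> subst_spec (up_sub s) (S k) (lift u) (upren g) (pre_up pre).
Proof.
  intros [H1 [H2 H3]]. split; [|split].
  - simpl. rewrite H1; auto.
  - intros [|n] Hn; simpl; auto. rewrite H2; auto.
  - intros [|m]; simpl.
    + split. { constructor. simpl; tauto. constructor. }
      intros [|j]; simpl; split; intros H.
      * split; [congruence|auto].
      * left; auto.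
      * destruct H; [discriminate|contradiction].
      * destruct H as [_ H]; discriminate.
    + destruct (H3 m) as [ND HI]. split.
      * apply FinFun.Injective_map_NoDup; auto. intros a b; congruence.
      * intros [|j]; simpl; split; intros H.
        -- apply in_map_iff in H. destruct H as [? [? ?]]; discriminate.
        -- destruct H; discriminate.
        -- apply in_map_iff in H. destruct H as [j' [E I]]. injection E; intros; subst. apply HI in I. destruct I; split; congruence.
        -- apply in_map_iff. exists j. split; auto. apply HI. destruct H; split; congruence.
Qed.

Lemma mtyp_meq_split D u L L1 L2 n m : mtyp D u L n m -> meq L (L1 ++ L2) ->
  exists D1 D2 n1 m1 n2 m2, mtyp D1 u L1 n1 m1 /\ mtyp D2 u L2 n2 m2 /\ eeq D (eadd D1 D2) /\
    n = n1 + n2 /\ m = m1 + m2.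
Proof. intros H E. apply mtyp_split. eapply mtyp_meq; eauto. Qed.

Lemma length_app_meq (L L1 L2 : list ty) : meq L (L1 ++ L2) -> length L = length L1 + length L2.
Proof. intros H. rewrite (meq_length _ _ H). apply length_app. Qed.

Definition typ_subst_prop (t : term) : Prop :=
  forall G sg n m s k u g pre D nu mu,
  typ G t sg n m -> subst_spec s k u g pre -> mtyp D u (G k) nu mu ->
  exists N, N + length (G k) = n + nu /\ typ (eadd (renv pre G) D) (subst s t) sg N (m + mu).

Lemma mtyp_subst t2 : typ_subst_prop t2 ->
  forall L G n m s k u g pre D nu mu,
  mtyp G t2 L n m -> subst_spec s k u g pre -> mtyp D u (G k) nu mu ->
  exists N, N + length (G k) = n + nu /\ mtyp (eadd (renv pre G) D) (subst s t2) L N (m + mu).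
Proof.
  intros IH. induction L; intros G n m s k u g pre D nu mu H HS Hu.
  - apply mtyp_nil_inv in H. destruct H as [E [-> ->]].
    assert (Gk : G k = nil) by (apply cnt0_nil; intros; rewrite E; auto).
    rewrite Gk in Hu. apply mtyp_nil_inv in Hu. destruct Hu as [ED [-> ->]].
    exists 0. rewrite Gk. split; auto. constructor.
    intros j x. unfold eadd. rewrite cnt_app, ED. unfold eempty.
    rewrite (renv_eeq pre G eempty E j x), renv_empty. simpl; auto.
  - apply inv_mcons in H. destruct H as [G1 [G2 [n1 [m1 [n2 [m2 [T [H [HG [-> ->]]]]]]]]]].
    assert (HM : meq (G k) (G1 k ++ G2 k)) by (intros x; rewrite HG; auto).
    destruct (mtyp_meq_split _ _ _ _ _ _ _ Hu HM) as [D1 [D2 [a1 [b1 [a2 [b2 [HD1 [HD2 [HD [-> ->]]]]]]]]]].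
    destruct (IH _ _ _ _ _ _ _ _ _ _ _ _ T HS HD1) as [N1 [E1 T1]].
    destruct (IHL _ _ _ _ _ _ _ _ _ _ _ H HS HD2) as [N2 [E2 T2]].
    exists (N1 + N2). rewrite (length_app_meq _ _ _ HM). split; [lia|].
    replace (m1 + m2 + (b1 + b2)) with ((m1 + b1) + (m2 + b2)) by lia.
    econstructor; eauto. intros j x. unfold eadd. rewrite !cnt_app, HD, (renv_eeq pre G _ HG j x), (renv_add pre G1 G2 j x).
    unfold eadd; rewrite !cnt_app; lia.
Qed.

Lemma typ_subst_var n : typ_subst_prop (Var n).
Proof.
  intros G sg nn mm s k u g pre D nu mu H HS Hu; simpl.
  apply inv_var in H. destruct H as [-> [-> E]]. destruct HS as [S1 [S2 S3]].
  destruct (Nat.eq_dec n k) as [->|Hne].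
  - rewrite S1. assert (Hk : meq (G k) (sg :: nil)). { intros x. rewrite E. unfold esingle. rewrite Nat.eqb_refl; auto. }
    rewrite (meq_length _ _ Hk). apply (mtyp_meq _ _ _ _ _ _ Hu) in Hk. apply mtyp_single in Hk.
    exists nu. split; [simpl; lia|]. simpl. eapply typ_eeq; eauto.
    intros j x. unfold eadd. rewrite cnt_app. rewrite (renv_eeq pre G _ E j x).
    destruct (S3 j) as [ND HI]. rewrite cnt_renv_single; auto.
    destruct (in_dec Nat.eq_dec k (pre j)) as [I|I]; auto. apply HI in I. destruct I; contradiction.
  - rewrite (S2 n Hne). assert (Gk : G k = nil).
    { apply cnt0_nil. intros x. rewrite E. unfold esingle. destruct (Nat.eqb_spec k n); [congruence|auto]. }
    rewrite Gk in Hu. apply mtyp_nil_inv in Hu. destruct Hu as [ED [-> ->]].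
    exists 1. rewrite Gk. split; [simpl; lia|]. constructor.
    intros j x. unfold eadd. rewrite cnt_app, ED. unfold eempty. simpl. rewrite Nat.add_0_r.
    rewrite (renv_eeq pre G _ E j x). destruct (S3 j) as [ND HI]. rewrite cnt_renv_single; auto.
    unfold esingle. destruct (in_dec Nat.eq_dec n (pre j)) as [I|I].
    + apply HI in I. destruct I as [_ <-]. rewrite Nat.eqb_refl; auto.
    + destruct (Nat.eqb_spec j (g n)); auto. exfalso; apply I, HI; auto.
Qed.

Lemma typ_subst t : typ_subst_prop t.
Proof.
  induction t; [apply typ_subst_var|..]; intros G sg nn mm s k u g pre D nu mu H HS Hu; simpl.
  - apply inv_lam in H. destruct H as [G1 [M [s' [n' [-> [-> [T [HM HE]]]]]]]].
    assert (Hk : meq (G k) (G1 (S k))) by (intros x; rewrite HE; auto).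
    apply (mtyp_meq _ _ _ _ _ _ Hu) in Hk as Hu'. apply mtyp_lift in Hu'.
    destruct (IHt _ _ _ _ _ _ _ _ _ _ _ _ T (subst_spec_up _ _ _ _ _ HS) Hu') as [N [EN TN]].
    exists (S N). rewrite (meq_length _ _ Hk). split; [lia|]. econstructor; eauto.
    + intros x. specialize (HM x). unfold eadd. rewrite cnt_app, renv_up_0. simpl. lia.
    + intros j x. unfold eadd, etail. rewrite !cnt_app. rewrite (renv_eeq pre G _ HE j x).
      rewrite <- (renv_up_tail pre G1 j x). unfold etail. simpl. reflexivity.
  - apply inv_app in H. destruct H as [G1 [Da [M [n1 [m1 [n2 [m2 [tau [-> [-> [T [Ha HE]]]]]]]]]]]].
    assert (HM : meq (G k) (G1 k ++ Da k)) by (intros x; rewrite HE; auto).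
    destruct (mtyp_meq_split _ _ _ _ _ _ _ Hu HM) as [D1 [D2 [a1 [b1 [a2 [b2 [HD1 [HD2 [HD [-> ->]]]]]]]]]].
    destruct (IHt1 _ _ _ _ _ _ _ _ _ _ _ _ T HS HD1) as [N1 [E1 T1]].
    destruct (mtyp_subst t2 IHt2 _ _ _ _ _ _ _ _ _ _ _ _ Ha HS HD2) as [N2 [E2 T2]].
    exists (S (N1 + N2)). rewrite (length_app_meq _ _ _ HM). split; [lia|].
    replace (m1 + m2 + (b1 + b2)) with ((m1 + b1) + (m2 + b2)) by lia.
    econstructor; eauto. intros j x. unfold eadd. rewrite !cnt_app, HD, (renv_eeq pre G _ HE j x), (renv_add pre G1 Da j x).
    unfold eadd; rewrite !cnt_app; lia.
  - apply inv_jmp in H. destruct H as [G1 [Da [M [n1 [m1 [n2 [m2 [tau [-> [-> [T [HM [Ha HE]]]]]]]]]]]]].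
    assert (HMk : meq (G k) (G1 (S k) ++ Da k)) by (intros x; rewrite HE; auto).
    destruct (mtyp_meq_split _ _ _ _ _ _ _ Hu HMk) as [D1 [D2 [a1 [b1 [a2 [b2 [HD1 [HD2 [HD [-> ->]]]]]]]]]].
    apply mtyp_lift in HD1.
    destruct (IHt1 _ _ _ _ _ _ _ _ _ _ _ _ T (subst_spec_up _ _ _ _ _ HS) HD1) as [N1 [E1 T1]].
    destruct (mtyp_subst t2 IHt2 _ _ _ _ _ _ _ _ _ _ _ _ Ha HS HD2) as [N2 [E2 T2]].
    exists (N1 + N2). rewrite (length_app_meq _ _ _ HMk). split; [lia|].
    replace (m1 + m2 + 3 ^ length M + (b1 + b2)) with ((m1 + b1) + (m2 + b2) + 3 ^ length M) by lia.
    econstructor; eauto.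
    + intros x. specialize (HM x). unfold eadd. rewrite cnt_app, renv_up_0. simpl. lia.
    + intros j x. unfold eadd, etail. rewrite !cnt_app, HD, (renv_eeq pre G _ HE j x), (renv_add pre (etail G1) Da j x).
      unfold eadd. rewrite !cnt_app. rewrite <- (renv_up_tail pre G1 j x). unfold etail. simpl. lia.
Qed.

Definition pre_pred (m : nat) : list nat := S m :: nil.

Lemma subst_spec0 u : subst_spec (fun n => match n with 0 => u | S m => Var m end) 0 u Nat.pred pre_pred.
Proof.
  split; [|split]; auto.
  - intros [|n] Hn; [congruence|auto].
  - intros m. split. constructor; auto; constructor. intros j; simpl; split; intros H.
    + destruct H as [<-|[]]. split; auto.
    + destruct H as [H1 H2]. destruct j; [congruence|]. left; simpl in *; congruence.
Qed.

Lemma renv_pre_pred G : eeq (renv pre_pred G) (etail G).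
Proof. intros m x; unfold renv, etail, pre_pred; simpl. rewrite cnt_app; simpl; lia. Qed.

Lemma typ_subst0 G t sg n m u D nu mu : typ G t sg n m -> mtyp D u (G 0) nu mu ->
  exists N, N + length (G 0) = n + nu /\ typ (eadd (etail G) D) (subst0 u t) sg N (m + mu).
Proof.
  intros H Hu. destruct (typ_subst t G sg n m _ 0 u Nat.pred pre_pred D nu mu H (subst_spec0 u) Hu) as [N [E T]].
  exists N; split; auto. eapply typ_eeq; eauto. intros j x. unfold eadd. rewrite !cnt_app, renv_pre_pred; auto.
Qed.

Lemma sub_refl L : sub L L.
Proof. intros x; lia. Qed.

Lemma sub_split L M : sub L M -> exists R, meq M (L ++ R).
Proof.
  revert M; induction L as [|a L IH]; intros M H.
  - exists M; intros x; auto.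
  - assert (Ha : In a M).
    { specialize (H a). rewrite cnt_cons in H. destruct (ty_eq_dec a a); [|congruence].
      apply (count_occ_In ty_eq_dec). unfold cnt in H; lia. }
    apply in_split in Ha. destruct Ha as [M1 [M2 ->]].
    destruct (IH (M1 ++ M2)) as [R HR].
    { intros x. specialize (H x). rewrite cnt_cons in H. rewrite cnt_app, cnt_cons in H. rewrite cnt_app. lia. }
    exists R. intros x. specialize (HR x). rewrite !cnt_app in HR. rewrite (cnt_app M1), cnt_cons.
    change ((a::L)++R) with (a :: (L ++ R)). rewrite cnt_cons, cnt_app. lia.
Qed.

Definition env_split k (G G' : env) := forall x,
  (forall j, j < k -> cnt (G j) x = cnt (G' j) x) /\ cnt (G k) x = cnt (G' k) x + cnt (G' (S k)) x /\
  (forall j, k < j -> cnt (G j) x = cnt (G' (S j)) x).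

Lemma env_split_eeq G H G' k : eeq G H -> env_split k H G' -> env_split k G G'.
Proof.
  intros E S x. destruct (S x) as [A [B C]]. split; [|split].
  - intros j Hj; rewrite E; auto.
  - rewrite E; auto.
  - intros j Hj; rewrite E; auto.
Qed.

Lemma env_split_add k G1 G2 G1' G2' : env_split k G1 G1' -> env_split k G2 G2' -> env_split k (eadd G1 G2) (eadd G1' G2').
Proof.
  intros S1 S2 x. destruct (S1 x) as [A [B C]]. destruct (S2 x) as [A' [B' C']].
  unfold eadd; split; [|split].
  - intros j Hj; rewrite !cnt_app, A, A'; auto.
  - rewrite !cnt_app, B, B'; lia.
  - intros j Hj; rewrite !cnt_app, C, C'; auto.
Qed.

Lemma env_split_tail k G G' : env_split (S k) G G' -> env_split k (etail G) (etail G').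
Proof.
  intros S x. destruct (S x) as [A [B C]]. unfold etail; split; [|split].
  - intros j Hj; apply A; lia.
  - apply B.
  - intros j Hj; apply C; lia.
Qed.

Lemma env_split_empty k : env_split k eempty eempty.
Proof. intros x; unfold eempty; repeat split; intros; simpl; auto. Qed.

Lemma env_split_single k a b L : (a < k /\ b = a) \/ (a = k /\ (b = k \/ b = S k)) \/ (k < a /\ b = S a) ->
  env_split k (esingle a L) (esingle b L).
Proof.
  intros H x. unfold esingle. split; [|split]; [intros j Hj| |intros j Hj];
  repeat match goal with |- context [Nat.eqb ?p ?q] => destruct (Nat.eqb_spec p q) end;
  simpl; try lia.
Qed.

Lemma mtyp_part u u' k : (forall G s n m, typ G u s n m -> exists G', typ G' u' s n m /\ env_split k G G') ->
  forall L G n m, mtyp G u L n m -> exists G', mtyp G' u' L n m /\ env_split k G G'.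
Proof.
  intros IH. induction L; intros G n m H.
  - apply mtyp_nil_inv in H. destruct H as [E [-> ->]]. exists eempty. split.
    constructor; apply eeq_refl. eapply env_split_eeq; eauto. apply env_split_empty.
  - apply inv_mcons in H. destruct H as [G1 [G2 [n1 [m1 [n2 [m2 [T [H [HG [-> ->]]]]]]]]]].
    destruct (IH _ _ _ _ T) as [G1' [T' S1]]. destruct (IHL _ _ _ H) as [G2' [H' S2]].
    exists (eadd G1' G2'). split. econstructor; eauto. apply eeq_refl.
    eapply env_split_eeq; eauto. apply env_split_add; auto.
Qed.

Lemma typ_part k t t' : part k t t' -> forall G s n m, typ G t s n m -> exists G', typ G' t' s n m /\ env_split k G G'.
Proof.
  induction 1; intros G s nn mm HT.
  - apply inv_var in HT. destruct HT as [-> [-> E]]. exists (esingle k (s :: nil)). split.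
    constructor; apply eeq_refl. eapply env_split_eeq; eauto. apply env_split_single; auto.
  - apply inv_var in HT. destruct HT as [-> [-> E]]. exists (esingle (S k) (s :: nil)). split.
    constructor; apply eeq_refl. eapply env_split_eeq; eauto. apply env_split_single; auto.
  - apply inv_var in HT. destruct HT as [-> [-> E]]. exists (esingle n (s :: nil)). split.
    constructor; apply eeq_refl. eapply env_split_eeq; eauto. apply env_split_single; auto.
  - apply inv_var in HT. destruct HT as [-> [-> E]]. exists (esingle (S n) (s :: nil)). split.
    constructor; apply eeq_refl. eapply env_split_eeq; eauto. apply env_split_single; auto.
  - apply inv_lam in HT. destruct HT as [G1 [M [s' [n' [-> [-> [T [HM HE]]]]]]]].
    destruct (IHpart _ _ _ _ T) as [G1' [T' S1]]. exists (etail G1'). split.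
    + econstructor; eauto. intros x. destruct (S1 x) as [A _]. rewrite <- A; [apply HM|lia]. apply eeq_refl.
    + eapply env_split_eeq; eauto. apply env_split_tail; auto.
  - apply inv_app in HT. destruct HT as [G1 [D [M [n1 [m1 [n2 [m2 [tau [-> [-> [T [Hu HE]]]]]]]]]]]].
    destruct (IHpart1 _ _ _ _ T) as [G1' [T' S1]].
    destruct (mtyp_part _ _ _ IHpart2 _ _ _ _ Hu) as [D' [Hu' S2]].
    exists (eadd G1' D'). split. econstructor; eauto. apply eeq_refl.
    eapply env_split_eeq; eauto. apply env_split_add; auto.
  - apply inv_jmp in HT. destruct HT as [G1 [D [M [n1 [m1 [n2 [m2 [tau [-> [-> [T [HM [Hu HE]]]]]]]]]]]]].
    destruct (IHpart1 _ _ _ _ T) as [G1' [T' S1]].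
    destruct (mtyp_part _ _ _ IHpart2 _ _ _ _ Hu) as [D' [Hu' S2]].
    exists (eadd (etail G1') D'). split. econstructor; eauto.
    + intros x. destruct (S1 x) as [A _]. rewrite <- A; [apply HM|lia].
    + apply eeq_refl.
    + eapply env_split_eeq; eauto. apply env_split_add; auto. apply env_split_tail; auto.
Qed.

Definition swapf (n : nat) : nat := match n with 0 => 1 | 1 => 0 | n => n end.

Definition preSw (m : nat) : list nat := swapf m :: nil.

Lemma swapf_inv n : swapf (swapf n) = n.
Proof. destruct n as [|[|n]]; reflexivity. Qed.

Lemma swapf_inj a b : swapf a = swapf b -> a = b.
Proof. intros H. rewrite <- (swapf_inv a), <- (swapf_inv b), H; auto. Qed.

Lemma preimage_spec_sw : preimage_spec swapf preSw.
Proof.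
  intros m. split. constructor; auto; constructor.
  intros k; simpl; split; intros H.
  - destruct H as [H|[]]. rewrite <- H, swapf_inv; auto.
  - left. rewrite <- H, swapf_inv; auto.
Qed.

Lemma cnt_renv_sw K m x : cnt (renv preSw K m) x = cnt (K (swapf m)) x.
Proof. unfold renv, preSw; simpl; rewrite cnt_app; simpl; lia. Qed.

Lemma swap01_ren t : swap01 t = ren swapf t.
Proof. reflexivity. Qed.

Lemma swap01_inv t : swap01 (swap01 t) = t.
Proof. rewrite (swap01_ren (swap01 t)), (swap01_ren t), ren_ren. rewrite <- (ren_id t) at 2. apply ren_ext. apply swapf_inv. Qed.

Lemma typ_swap K t s n m : typ K t s n m -> typ (renv preSw K) (swap01 t) s n m.
Proof. intros; rewrite swap01_ren; apply typ_ren; auto; apply preimage_spec_sw. Qed.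

Lemma lift_support D s L n m : mtyp D (lift s) L n m -> forall x, cnt (D 0) x = 0.
Proof. intros H. apply (mtyp_support _ _ _ _ _ 0 H). apply occ_lift0. Qed.

Lemma mtyp_unlift D s L n m : mtyp D (lift s) L n m -> mtyp (ecomp D S) s L n m.
Proof. intros H. apply mtyp_unren in H; auto. Qed.

Ltac eunf := unfold eadd, etail, scons, ecomp, eempty in *.

Lemma typ_cs G t s v sg n m : typ G (Jmp (Jmp t (lift s)) v) sg n m -> typ G (Jmp (Jmp (swap01 t) (lift v)) s) sg n m.
Proof.
  intros H.
  apply inv_jmp in H. destruct H as [H0 [Dv [My [n1 [m1 [n2 [m2 [t1 [-> [-> [T [HMy [Hv HE]]]]]]]]]]]]].
  apply inv_jmp in T. destruct T as [K [Ds [Mx [a1 [b1 [a2 [b2 [t2 [-> [-> [T [HMx [Hs HH]]]]]]]]]]]]].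
  pose proof (lift_support _ _ _ _ _ Hs) as Z. apply mtyp_unlift in Hs.
  apply typ_swap in T. apply mtyp_lift in Hv.
  replace (a1 + a2 + n2) with ((a1 + n2) + a2) by lia.
  replace (b1 + b2 + 3 ^ length Mx + m2 + 3 ^ length My) with ((b1 + m2 + 3 ^ length My) + b2 + 3 ^ length Mx) by lia.
  econstructor.
  - econstructor. exact T.
    + intros x. rewrite cnt_renv_sw. simpl. specialize (HMy x). specialize (HH 0 x). specialize (Z x).
      eunf. rewrite cnt_app in HH. lia.
    + exact Hv.
    + apply eeq_refl.
  - intros x. eunf. rewrite cnt_app, cnt_renv_sw. simpl. specialize (HMx x). simpl. lia.
  - exact Hs.
  - intros j x. specialize (HE j x). specialize (HH (S j) x). eunf. rewrite !cnt_app in *.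
    rewrite cnt_renv_sw. simpl. lia.
Qed.

Lemma typ_cs_rev G t s v sg n m : typ G (Jmp (Jmp (swap01 t) (lift v)) s) sg n m -> typ G (Jmp (Jmp t (lift s)) v) sg n m.
Proof. intros H. apply typ_cs in H. rewrite swap01_inv in H. auto. Qed.

Lemma typ_olam G t s sg n m : typ G (Lam (Jmp t (lift s))) sg n m -> typ G (Jmp (Lam (swap01 t)) s) sg n m.
Proof.
  intros H.
  apply inv_lam in H. destruct H as [H0 [N [sg' [n' [-> [-> [T [HN HE]]]]]]]].
  apply inv_jmp in T. destruct T as [K [Ds [Mx [a1 [b1 [a2 [b2 [t2 [-> [-> [T [HMx [Hs HH]]]]]]]]]]]]].
  pose proof (lift_support _ _ _ _ _ Hs) as Z. apply mtyp_unlift in Hs.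
  apply typ_swap in T.
  replace (S (a1 + a2)) with (S a1 + a2) by lia.
  econstructor.
  - econstructor. exact T.
    + intros x. rewrite cnt_renv_sw. simpl. specialize (HN x). specialize (HH 0 x). specialize (Z x).
      eunf. rewrite cnt_app in HH. lia.
    + apply eeq_refl.
  - intros x. eunf. rewrite cnt_renv_sw. simpl. apply HMx.
  - exact Hs.
  - intros j x. specialize (HE j x). specialize (HH (S j) x). eunf. rewrite !cnt_app in *.
    rewrite cnt_renv_sw. simpl. lia.
Qed.

Lemma typ_olam_rev G t s sg n m : typ G (Jmp (Lam (swap01 t)) s) sg n m -> typ G (Lam (Jmp t (lift s))) sg n m.
Proof.
  intros H.
  apply inv_jmp in H. destruct H as [L [Ds [Mx [n1 [m1 [n2 [m2 [t1 [-> [-> [T [HMx [Hs HE]]]]]]]]]]]]].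
  apply inv_lam in T. destruct T as [P [N [sg' [n' [-> [-> [T [HN HL]]]]]]]].
  rewrite swap01_ren in T. apply typ_unren in T; [|apply swapf_inj].
  apply mtyp_lift in Hs.
  replace (S n' + n2) with (S (n' + n2)) by lia.
  econstructor.
  - econstructor. exact T.
    + intros x. unfold ecomp; simpl. specialize (HMx x). specialize (HL 0 x). eunf. lia.
    + exact Hs.
    + apply eeq_refl.
  - intros x. eunf. rewrite cnt_app. simpl. specialize (HN x). lia.
  - intros j x. specialize (HE j x). specialize (HL (S j) x). eunf. rewrite !cnt_app in *. simpl in *. lia.
Qed.

Lemma typ_oapp G t s v sg n m : typ G (App (Jmp t s) v) sg n m -> typ G (Jmp (App t (lift v)) s) sg n m.
Proof.
  intros H.
  apply inv_app in H. destruct H as [H0 [Dv [M [n1 [m1 [n2 [m2 [t1 [-> [-> [T [Hv HE]]]]]]]]]]]].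
  apply inv_jmp in T. destruct T as [K [Ds [Mx [a1 [b1 [a2 [b2 [t2 [-> [-> [T [HMx [Hs HH]]]]]]]]]]]]].
  apply mtyp_lift in Hv.
  replace (S (a1 + a2 + n2)) with (S (a1 + n2) + a2) by lia.
  replace (b1 + b2 + 3 ^ length Mx + m2) with ((b1 + m2) + b2 + 3 ^ length Mx) by lia.
  econstructor.
  - econstructor. exact T. exact Hv. apply eeq_refl.
  - intros x. eunf. rewrite cnt_app. simpl. specialize (HMx x). lia.
  - exact Hs.
  - intros j x. specialize (HE j x). specialize (HH j x). eunf. rewrite !cnt_app in *. simpl in *. lia.
Qed.

Lemma typ_oapp_rev G t s v sg n m : typ G (Jmp (App t (lift v)) s) sg n m -> typ G (App (Jmp t s) v) sg n m.
Proof.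
  intros H.
  apply inv_jmp in H. destruct H as [A [Ds [Mx [n1 [m1 [n2 [m2 [t1 [-> [-> [T [HMx [Hs HE]]]]]]]]]]]]].
  apply inv_app in T. destruct T as [K [Dv [M [a1 [b1 [a2 [b2 [t2 [-> [-> [T [Hv HA]]]]]]]]]]]].
  pose proof (lift_support _ _ _ _ _ Hv) as Z. apply mtyp_unlift in Hv.
  replace (S (a1 + a2) + n2) with (S (a1 + n2 + a2)) by lia.
  replace (b1 + b2 + m2 + 3 ^ length Mx) with ((b1 + m2 + 3 ^ length Mx) + b2) by lia.
  econstructor.
  - econstructor. exact T.
    + intros x. specialize (HMx x). specialize (HA 0 x). specialize (Z x). eunf. rewrite cnt_app in HA. lia.
    + exact Hs.
    + apply eeq_refl.
  - exact Hv.
  - intros j x. specialize (HE j x). specialize (HA (S j) x). eunf. rewrite !cnt_app in *. simpl in *. lia.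
Qed.

Lemma oax_typ t t' : o_ax t t' -> forall G sg n m, typ G t sg n m <-> typ G t' sg n m.
Proof.
  destruct 1; intros G sg n m; split; intros H.
  - apply typ_cs; auto.
  - apply typ_cs_rev; auto.
  - apply typ_olam; auto.
  - apply typ_olam_rev; auto.
  - apply typ_oapp; auto.
  - apply typ_oapp_rev; auto.
Qed.

Lemma mtyp_id u u' : (forall G s n m, typ G u s n m -> typ G u' s n m) ->
  forall L G n m, mtyp G u L n m -> mtyp G u' L n m.
Proof.
  intros H L G n m. apply (mtyp_map u u' (fun G => G)); auto.
  - intros; apply eeq_refl.
  - apply eeq_refl.
Qed.

Lemma ctx_oax_typ t t' : ctx o_ax t t' -> forall G sg n m, typ G t sg n m <-> typ G t' sg n m.
Proof.
  induction 1; intros G sg nn mm.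
  - apply oax_typ; auto.
  - split; intros HT; apply inv_lam in HT; destruct HT as [G1 [M [s' [n' [-> [-> [T [HM HE]]]]]]]];
      econstructor; eauto; apply IHctx; auto.
  - split; intros HT; apply inv_app in HT; destruct HT as [G1 [D [M [n1 [m1 [n2 [m2 [tau [-> [-> [T [Hu HE]]]]]]]]]]]];
      econstructor; eauto; apply IHctx; auto.
  - split; intros HT; apply inv_app in HT; destruct HT as [G1 [D [M [n1 [m1 [n2 [m2 [tau [-> [-> [T [Hu HE]]]]]]]]]]]].
    + eapply T_app; [exact T| |exact HE]. eapply mtyp_id; [|exact Hu]. intros; apply (proj1 (IHctx _ _ _ _)); auto.
    + eapply T_app; [exact T| |exact HE]. eapply mtyp_id; [|exact Hu]. intros; apply (proj2 (IHctx _ _ _ _)); auto.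
  - split; intros HT; apply inv_jmp in HT; destruct HT as [G1 [D [M [n1 [m1 [n2 [m2 [tau [-> [-> [T [HM [Hu HE]]]]]]]]]]]]];
      econstructor; eauto; apply IHctx; auto.
  - split; intros HT; apply inv_jmp in HT; destruct HT as [G1 [D [M [n1 [m1 [n2 [m2 [tau [-> [-> [T [HM [Hu HE]]]]]]]]]]]]].
    + eapply T_jmp; [exact T|exact HM| |exact HE]. eapply mtyp_id; [|exact Hu]. intros; apply (proj1 (IHctx _ _ _ _)); auto.
    + eapply T_jmp; [exact T|exact HM| |exact HE]. eapply mtyp_id; [|exact Hu]. intros; apply (proj2 (IHctx _ _ _ _)); auto.
Qed.

Lemma equiv_o_typ t t' : equiv_o t t' -> forall G sg n m, typ G t sg n m <-> typ G t' sg n m.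
Proof.
  induction 1; intros G sg n m.
  - apply ctx_oax_typ; auto.
  - tauto.
  - rewrite IHclos_refl_sym_trans; tauto.
  - rewrite IHclos_refl_sym_trans1; auto.
Qed.

Definition lex_lt (a b c d : nat) := a < c \/ (a = c /\ b < d).

Definition measure_decreases t t' := forall G s n m, typ G t s n m ->
  exists G' E n' m', typ G' t' s n' m' /\ eeq G (eadd G' E) /\ lex_lt n' m' n m.

Lemma wrapL_app t L1 L2 : wrapL t (L1 ++ L2) = wrapL (wrapL t L1) L2.
Proof. revert t; induction L1; intros t; simpl; auto. Qed.

Lemma sharp_eq M tau : M <> nil -> sharp M tau = M.
Proof. destruct M; simpl; congruence. Qed.

(* Firing dB under a list of jumps, using the o-equation (t[x/s]) v ~ (t v)[x/s]
   to move the jumps out of the way; the size drops by 2. *)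
Lemma dB_typ L : forall t u G s n m, typ G (App (wrapL (Lam t) L) u) s n m ->
  exists n' m', typ G (wrapL (Jmp t (ren (fun k => k + length L) u)) L) s n' m' /\ n' + 2 = n.
Proof.
  induction L as [|v L IH] using rev_ind; intros t u G s n m H; simpl.
  - rewrite (ren_ext _ (fun k => k)), ren_id by (intros; lia).
    apply inv_app in H. destruct H as [G1 [D [M [n1 [m1 [n2 [m2 [tau [-> [-> [T [Hu HE]]]]]]]]]]]].
    apply inv_lam in T. destruct T as [P [M' [s' [n' [E [-> [T [HM HP]]]]]]]]. injection E; intros; subst.
    exists (n' + n2), (m1 + m2 + 3 ^ length M'). split; [|lia].
    econstructor; eauto. intros j x. specialize (HE j x). specialize (HP j x). unfold eadd, etail in *.
    rewrite cnt_app in *. lia.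
  - rewrite !wrapL_app in *. simpl in *. apply typ_oapp in H.
    apply inv_jmp in H. destruct H as [K [D [M [n1 [m1 [n2 [m2 [tau [-> [-> [T [HM [Hu HE]]]]]]]]]]]]].
    destruct (IH _ _ _ _ _ _ T) as [n' [m' [T' En]]].
    exists (n' + n2), (m' + m2 + 3 ^ length M). split; [|lia].
    econstructor; eauto.
    replace (ren (fun k => k + length (L ++ v :: nil)) u) with (ren (fun k => k + length L) (lift u)); auto.
    unfold lift. rewrite ren_ren. apply ren_ext. intros k. rewrite length_app. simpl. lia.
Qed.

Definition prePred (m : nat) : list nat := S m :: (match m with 0 => 0 :: nil | _ => nil end).

Lemma preimage_spec_pred : preimage_spec Nat.pred prePred.
Proof.
  intros m; split.
  - destruct m; simpl; repeat constructor; simpl; intuition congruence.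
  - intros k; destruct m, k; simpl; intuition congruence.
Qed.

Lemma pow3_superadditive a b : 1 <= a -> 1 <= b -> 3 ^ a + 3 ^ b < 3 ^ (a + b).
Proof.
  intros Ha Hb. rewrite Nat.pow_add_r.
  assert (3 <= 3 ^ a). { replace 3 with (3 ^ 1) at 1 by reflexivity. apply Nat.pow_le_mono_r; lia. }
  assert (3 <= 3 ^ b). { replace 3 with (3 ^ 1) at 1 by reflexivity. apply Nat.pow_le_mono_r; lia. }
  nia.
Qed.

Lemma nonnil_length (L : list ty) : L <> nil -> 1 <= length L.
Proof. destruct L; simpl; [congruence|lia]. Qed.

Lemma sub_nonnil L M : sub L M -> L <> nil -> M <> nil.
Proof.
  intros H HL ->. apply HL. apply cnt0_nil. intros x. specialize (H x). simpl in H. lia.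
Qed.

(* The four root rules decrease the measure: dB erases the application and the
   abstraction, w erases the typing of the argument, d erases the axioms typing
   the substituted variable, and c keeps the size while 3^(a+b) > 3^a + 3^b
   makes the weight drop. *)
Lemma dB_decreases t L u :
  measure_decreases (App (wrapL (Lam t) L) u) (wrapL (Jmp t (ren (fun n => n + length L) u)) L).
Proof.
  intros G s nn mm HT.
  destruct (dB_typ _ _ _ _ _ _ _ HT) as [n' [m' [T En]]].
  exists G, eempty, n', m'. split; auto. split; [|left; lia].
  intros j x; unfold eadd, eempty; rewrite cnt_app; simpl; lia.
Qed.

Lemma w_decreases t u : occ 0 t = 0 -> measure_decreases (Jmp t u) (ren Nat.pred t).
Proof.
  intros H G s nn mm HT.
  apply inv_jmp in HT. destruct HT as [K [D [M [n1 [m1 [n2 [m2 [tau [-> [-> [T [HM [Hu HE]]]]]]]]]]]]].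
  pose proof (typ_support _ _ _ _ _ 0 T H) as Z.
  apply (typ_ren _ _ _ _ _ Nat.pred prePred) in T; [|apply preimage_spec_pred].
  exists (etail K), D, n1, m1. split; [|split].
  + eapply typ_eeq; eauto. intros [|j] x; unfold renv, prePred, etail; simpl; rewrite !cnt_app; simpl;
      try rewrite Z; lia.
  + auto.
  + left. apply mtyp_size in Hu. pose proof (nonnil_length _ (sharp_nonnil M tau)). lia.
Qed.

Lemma d_decreases t u : occ 0 t = 1 -> measure_decreases (Jmp t u) (subst0 u t).
Proof.
  intros H G s nn mm HT.
  apply inv_jmp in HT. destruct HT as [K [D [M [n1 [m1 [n2 [m2 [tau [-> [-> [T [HM [Hu HE]]]]]]]]]]]]].
  assert (K0 : K 0 <> nil) by (apply (typ_nonempty _ _ _ _ _ 0 T); lia).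
  pose proof (sub_nonnil _ _ HM K0) as Mn. rewrite sharp_eq in Hu by auto.
  destruct (sub_split _ _ HM) as [R HR].
  destruct (mtyp_meq_split _ _ _ _ _ _ _ Hu HR) as [D1 [D2 [a1 [b1 [a2 [b2 [H1 [H2 [HD [-> ->]]]]]]]]]].
  destruct (typ_subst0 _ _ _ _ _ _ _ _ _ T H1) as [N [EN TN]].
  exists (eadd (etail K) D1), D2, N, (m1 + b1). split; auto. split.
  + intros j x. specialize (HE j x). specialize (HD j x). unfold eadd in *. rewrite !cnt_app in *. lia.
  + left. pose proof (nonnil_length _ K0). lia.
Qed.

Lemma c_decreases t u t' : part 0 t t' -> 1 <= occ 1 t' -> occ 1 t' <= occ 0 t - 1 ->
  measure_decreases (Jmp t u) (Jmp (Jmp t' (lift u)) u).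
Proof.
  intros H0 H1 H2 G s nn mm HT.
  apply inv_jmp in HT. destruct HT as [K [D [M [n1 [m1 [n2 [m2 [tau [-> [-> [T [HM [Hu HE]]]]]]]]]]]]].
  destruct (typ_part _ _ _ H0 _ _ _ _ T) as [K' [T' SP]].
  pose proof (part_occ _ _ _ H0) as PO.
  assert (K'0 : K' 0 <> nil) by (apply (typ_nonempty _ _ _ _ _ 0 T'); lia).
  assert (K'1 : K' 1 <> nil) by (apply (typ_nonempty _ _ _ _ _ 1 T'); lia).
  assert (HM' : sub (K' 0 ++ K' 1) M).
  { intros x. specialize (HM x). destruct (SP x) as [_ [B _]]. rewrite cnt_app. lia. }
  assert (Mn : M <> nil). { apply (sub_nonnil _ _ HM'). destruct (K' 0); simpl; congruence. }
  rewrite sharp_eq in Hu by auto.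
  destruct (sub_split _ _ HM') as [R HR].
  rewrite <- app_assoc in HR.
  destruct (mtyp_meq_split _ _ _ _ _ _ _ Hu HR) as [D1 [D2 [a1 [b1 [a2 [b2 [U1 [U2 [HD [-> ->]]]]]]]]]].
  apply mtyp_lift in U1.
  assert (Rn : K' 1 ++ R <> nil) by (destruct (K' 1); simpl; congruence).
  exists (eadd (etail (eadd (etail K') (scons nil D1))) D2), eempty, (n1 + a1 + a2),
    (m1 + b1 + 3 ^ length (K' 0) + b2 + 3 ^ length (K' 1 ++ R)).
  split; [|split].
  + econstructor.
    * econstructor; [exact T'|apply sub_refl| |apply eeq_refl].
      rewrite sharp_eq by auto. exact U1.
    * intros x. unfold eadd, etail, scons. rewrite cnt_app, cnt_app. simpl. lia.
    * rewrite sharp_eq by auto. exact U2.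
    * apply eeq_refl.
  + intros j x. specialize (HE j x). specialize (HD j x). destruct (SP x) as [_ [_ C]].
    specialize (C (S j) ltac:(lia)). unfold eadd, etail, scons, eempty in *. rewrite !cnt_app in *. simpl. lia.
  + right. split; [lia|].
    rewrite (meq_length _ _ HR), (length_app (K' 0)).
    pose proof (pow3_superadditive (length (K' 0)) (length (K' 1 ++ R)) (nonnil_length _ K'0) (nonnil_length _ Rn)). lia.
  Unshelve. all: exact (TAt 0).
Qed.

Lemma root_decreases t t' : lj_root t t' -> measure_decreases t t'.
Proof.
  destruct 1.
  - apply dB_decreases.
  - apply w_decreases; auto.
  - apply d_decreases; auto.
  - apply c_decreases; auto.
Qed.

Lemma mtyp_decreases u u' : measure_decreases u u' -> forall L G n m, L <> nil -> mtyp G u L n m ->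
  exists G' E n' m', mtyp G' u' L n' m' /\ eeq G (eadd G' E) /\ lex_lt n' m' n m.
Proof.
  intros HS. induction L as [|a L IH]; intros G n m HL H; [congruence|].
  apply inv_mcons in H. destruct H as [G1 [G2 [n1 [m1 [n2 [m2 [T [H [HG [-> ->]]]]]]]]]].
  destruct (HS _ _ _ _ T) as [G1' [E1 [n1' [m1' [T' [HE1 L1]]]]]].
  destruct L as [|b L'].
  - apply mtyp_nil_inv in H. destruct H as [Z [-> ->]].
    exists (eadd G1' eempty), E1, (n1' + 0), (m1' + 0). split; [|split].
    + econstructor; eauto. constructor; apply eeq_refl. apply eeq_refl.
    + intros j x. specialize (HG j x). specialize (HE1 j x). specialize (Z j x). unfold eadd, eempty in *.
      rewrite !cnt_app in *. simpl in *. lia.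
    + unfold lex_lt in *; lia.
  - destruct (IH _ _ _ ltac:(congruence) H) as [G2' [E2 [n2' [m2' [H' [HE2 L2]]]]]].
    exists (eadd G1' G2'), (eadd E1 E2), (n1' + n2'), (m1' + m2'). split; [|split].
    + econstructor; eauto. apply eeq_refl.
    + intros j x. specialize (HG j x). specialize (HE1 j x). specialize (HE2 j x). unfold eadd in *.
      rewrite !cnt_app in *. lia.
    + unfold lex_lt in *; lia.
Qed.

Lemma step_decreases t t' : lj_step t t' -> measure_decreases t t'.
Proof.
  induction 1; intros G s nn mm HT.
  - apply (root_decreases _ _ H); auto.
  - apply inv_lam in HT. destruct HT as [G1 [M [s' [n' [-> [-> [T [HM HE]]]]]]]].
    destruct (IHctx _ _ _ _ T) as [G1' [E1 [n1' [m1' [T' [HE1 L1]]]]]].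
    exists (etail G1'), (etail E1), (S n1'), m1'. split; [|split].
    + econstructor; eauto. intros x. specialize (HM x). specialize (HE1 0 x). unfold eadd in HE1.
      rewrite cnt_app in HE1. lia. apply eeq_refl.
    + intros j x. specialize (HE j x). specialize (HE1 (S j) x). unfold eadd, etail in *. rewrite cnt_app in *. lia.
    + unfold lex_lt in *; lia.
  - apply inv_app in HT. destruct HT as [G1 [D [M [n1 [m1 [n2 [m2 [tau [-> [-> [T [Hu HE]]]]]]]]]]]].
    destruct (IHctx _ _ _ _ T) as [G1' [E1 [n1' [m1' [T' [HE1 L1]]]]]].
    exists (eadd G1' D), E1, (S (n1' + n2)), (m1' + m2). split; [|split].
    + econstructor; eauto. apply eeq_refl.
    + intros j x. specialize (HE j x). specialize (HE1 j x). unfold eadd in *. rewrite !cnt_app in *. lia.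
    + unfold lex_lt in *; lia.
  - apply inv_app in HT. destruct HT as [G1 [D [M [n1 [m1 [n2 [m2 [tau [-> [-> [T [Hu HE]]]]]]]]]]]].
    destruct (mtyp_decreases _ _ IHctx _ _ _ _ (sharp_nonnil M tau) Hu) as [D' [E1 [n2' [m2' [Hu' [HE1 L1]]]]]].
    exists (eadd G1 D'), E1, (S (n1 + n2')), (m1 + m2'). split; [|split].
    + econstructor; eauto. apply eeq_refl.
    + intros j x. specialize (HE j x). specialize (HE1 j x). unfold eadd in *. rewrite !cnt_app in *. lia.
    + unfold lex_lt in *; lia.
  - apply inv_jmp in HT. destruct HT as [K [D [M [n1 [m1 [n2 [m2 [tau [-> [-> [T [HM [Hu HE]]]]]]]]]]]]].
    destruct (IHctx _ _ _ _ T) as [K' [E1 [n1' [m1' [T' [HE1 L1]]]]]].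
    exists (eadd (etail K') D), (etail E1), (n1' + n2), (m1' + m2 + 3 ^ length M). split; [|split].
    + econstructor; eauto. intros x. specialize (HM x). specialize (HE1 0 x). unfold eadd in HE1.
      rewrite cnt_app in HE1. lia. apply eeq_refl.
    + intros j x. specialize (HE j x). specialize (HE1 (S j) x). unfold eadd, etail in *. rewrite !cnt_app in *. lia.
    + unfold lex_lt in *; lia.
  - apply inv_jmp in HT. destruct HT as [K [D [M [n1 [m1 [n2 [m2 [tau [-> [-> [T [HM [Hu HE]]]]]]]]]]]]].
    destruct (mtyp_decreases _ _ IHctx _ _ _ _ (sharp_nonnil M tau) Hu) as [D' [E1 [n2' [m2' [Hu' [HE1 L1]]]]]].
    exists (eadd (etail K) D'), E1, (n1 + n2'), (m1 + m2' + 3 ^ length M). split; [|split].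
    + econstructor; eauto. apply eeq_refl.
    + intros j x. specialize (HE j x). specialize (HE1 j x). unfold eadd, etail in *. rewrite !cnt_app in *. lia.
    + unfold lex_lt in *; lia.
Qed.

Lemma typ_SN : forall n m t G s, typ G t s n m -> SN (lj_mod equiv_o) t.
Proof.
  intros n. induction n as [n IHn] using lt_wf_ind. intros m. induction m as [m IHm] using lt_wf_ind.
  intros t G s H. constructor. intros t' [t1 [t2 [E1 [St E2]]]].
  apply (equiv_o_typ _ _ E1) in H.
  destruct (step_decreases _ _ St _ _ _ _ H) as [G' [E [n' [m' [T' [_ L]]]]]].
  apply (equiv_o_typ _ _ E2) in T'.
  destruct L as [L|[-> L]]; [eapply IHn; eauto|eapply IHm; eauto].
Qed.

Lemma lam_ren t f : is_lambda t -> is_lambda (ren f t).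
Proof. revert f; induction t; simpl; intros f H; intuition. Qed.

Lemma lam_subst t s : is_lambda t -> (forall n, is_lambda (s n)) -> is_lambda (subst s t).
Proof.
  revert s; induction t; simpl; intros s H Hs; intuition.
  apply IHt; auto. intros [|n]; simpl; auto. apply lam_ren; auto.
Qed.

Fixpoint apps (h : term) (vs : list term) : term :=
  match vs with nil => h | v :: vs => apps (App h v) vs end.

Lemma apps_app h vs ws : apps h (vs ++ ws) = apps (apps h vs) ws.
Proof. revert h; induction vs; simpl; auto. Qed.

Lemma head_decomp t : exists h vs, t = apps h vs /\ forall a b, h <> App a b.
Proof.
  induction t.
  - exists (Var n), nil; split; auto; congruence.
  - exists (Lam t), nil; split; auto; congruence.
  - destruct IHt1 as [h [vs [-> Hh]]]. exists h, (vs ++ t2 :: nil). split; auto.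
    rewrite apps_app; auto.
  - exists (Jmp t1 t2), nil; split; auto; congruence.
Qed.

Lemma lam_apps_inv h vs : is_lambda (apps h vs) -> is_lambda h /\ Forall is_lambda vs.
Proof.
  revert h; induction vs; simpl; intros h H; auto.
  apply IHvs in H. destruct H as [[A B] C]. split; auto.
Qed.

Lemma lam_apps h vs : is_lambda h -> Forall is_lambda vs -> is_lambda (apps h vs).
Proof.
  revert h; induction vs; simpl; intros h H F; auto. inversion F; subst. apply IHvs; simpl; auto.
Qed.

Inductive subt : term -> term -> Prop :=
| st_lam t : subt t (Lam t)
| st_appl t u : subt t (App t u)
| st_appr t u : subt u (App t u)
| st_jmpl t u : subt t (Jmp t u)
| st_jmpr t u : subt u (Jmp t u).

Lemma clos_trans_rt (R : term -> term -> Prop) x y z : clos_trans term R x y -> clos_refl_trans term R y z -> clos_trans term R x z.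
Proof. intros H1 H2; revert x H1; induction H2; intros; auto. eapply t_trans; eauto. apply t_step; auto. Qed.

Lemma apps_sub h vs : clos_refl_trans term subt h (apps h vs) /\
  forall v, In v vs -> clos_trans term subt v (apps h vs).
Proof.
  revert h; induction vs as [|w vs IH]; intros h; simpl; split.
  - apply rt_refl.
  - intros v [].
  - destruct (IH (App h w)) as [A B]. eapply rt_trans; [apply rt_step; constructor|exact A].
  - intros v [->|I].
    + destruct (IH (App h v)) as [A B]. eapply clos_trans_rt; [apply t_step; constructor|exact A].
    + apply IH; auto.
Qed.

Lemma beta_apps h h' vs : beta_step h h' -> beta_step (apps h vs) (apps h' vs).
Proof. revert h h'; induction vs; simpl; intros; auto. apply IHvs. apply ctx_appl; auto. Qed.

Definition beta_sub_step (a b : term) := beta_step b a \/ subt a b.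

Lemma subt_comm s t s' : subt s t -> beta_step s s' -> exists t', beta_step t t' /\ subt s' t'.
Proof.
  destruct 1; intros H.
  - exists (Lam s'); split; [apply ctx_lam; auto|constructor].
  - exists (App s' u); split; [apply ctx_appl; auto|constructor].
  - exists (App t s'); split; [apply ctx_appr; auto|constructor].
  - exists (Jmp s' u); split; [apply ctx_jmpl; auto|constructor].
  - exists (Jmp t s'); split; [apply ctx_jmpr; auto|constructor].
Qed.

Lemma subt_star_comm s t s' : clos_refl_trans term subt s t -> beta_step s s' ->
  exists t', beta_step t t' /\ clos_refl_trans term subt s' t'.
Proof.
  intros H; revert s'; induction H; intros s' Hb.
  - destruct (subt_comm _ _ _ H Hb) as [t' [A B]]. exists t'; split; auto. apply rt_step; auto.
  - exists s'; split; auto. apply rt_refl.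
  - destruct (IHclos_refl_trans1 _ Hb) as [y' [A B]]. destruct (IHclos_refl_trans2 _ A) as [z' [C D]].
    exists z'; split; auto. eapply rt_trans; eauto.
Qed.

Lemma SN_beta_sub_step t : SN beta_step t -> forall s, clos_refl_trans term subt s t -> Acc beta_sub_step s.
Proof.
  induction 1 as [t _ IH]. intros s. induction s; intros Hst; constructor; intros y [Hb|Hs].
  all: try (destruct (subt_star_comm _ _ _ Hst Hb) as [t' [A B]]; eapply IH; eauto).
  all: inversion Hs; subst.
  all: try (match goal with H : _ -> Acc beta_sub_step ?y |- Acc beta_sub_step ?y => apply H end; eapply rt_trans; [apply rt_step; exact Hs|exact Hst]).
Qed.

Definition beta_sub_order (a b : term) := beta_step b a \/ clos_trans term subt a b.

Lemma SN_beta_sub_order t : SN beta_step t -> Acc beta_sub_order t.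
Proof.
  intros H. apply (Acc_incl _ _ (clos_trans term beta_sub_step)).
  - intros a b [Hb|Hs]. apply t_step; left; auto.
    induction Hs. apply t_step; right; auto. eapply t_trans; eauto.
  - apply Acc_clos_trans. apply (SN_beta_sub_step t H). apply rt_refl.
Qed.

Definition typ_antisubst_prop (t : term) : Prop :=
  forall G sg n m s k u g pre, typ G (subst s t) sg n m -> subst_spec s k u g pre ->
  exists G0 D n0 m0 nu mu, typ G0 t sg n0 m0 /\ mtyp D u (G0 k) nu mu /\ eeq G (eadd (renv pre G0) D).

Lemma typ_antisubst_var n : typ_antisubst_prop (Var n).
Proof.
  intros G sg nn mm s k u g pre H HS; simpl in H.
  destruct HS as [S1 [S2 S3]]. destruct (Nat.eq_dec n k) as [->|Hne].
  - rewrite S1 in H. exists (esingle k (sg :: nil)), G, 1, 0, nn, mm. split; [constructor; apply eeq_refl|split].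
    + unfold esingle. rewrite Nat.eqb_refl. apply mtyp_single; auto.
    + intros j x. unfold eadd. rewrite cnt_app. destruct (S3 j) as [ND HI]. rewrite cnt_renv_single; auto.
      destruct (in_dec Nat.eq_dec k (pre j)) as [I|I]; auto. apply HI in I. destruct I; contradiction.
  - rewrite (S2 n Hne) in H. apply inv_var in H. destruct H as [-> [-> E]].
    exists (esingle n (sg :: nil)), eempty, 1, 0, 0, 0. split; [constructor; apply eeq_refl|split].
    + unfold esingle. destruct (Nat.eqb_spec k n); [congruence|]. constructor; apply eeq_refl.
    + intros j x. unfold eadd, eempty. rewrite cnt_app, E. destruct (S3 j) as [ND HI]. rewrite cnt_renv_single; auto.
      unfold esingle. destruct (in_dec Nat.eq_dec n (pre j)) as [I|I].
      * apply HI in I. destruct I as [_ <-]. rewrite Nat.eqb_refl; simpl; lia.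
      * destruct (Nat.eqb_spec j (g n)); simpl; auto. exfalso; apply I, HI; auto.
Qed.

Lemma mtyp_antisubst t : typ_antisubst_prop t ->
  forall L Da n2 m2 s k u g pre, mtyp Da (subst s t) L n2 m2 -> subst_spec s k u g pre ->
  exists G0 D n0 m0 nu mu, mtyp G0 t L n0 m0 /\ mtyp D u (G0 k) nu mu /\ eeq Da (eadd (renv pre G0) D).
Proof.
  intros IH. induction L; intros Da n2 m2 s k u g pre Hm HS.
  - apply mtyp_nil_inv in Hm. destruct Hm as [E [-> ->]]. exists eempty, eempty, 0, 0, 0, 0.
    split; [constructor; apply eeq_refl|split; [constructor; apply eeq_refl|]].
    intros j x. unfold eadd. rewrite cnt_app, E, (renv_empty pre j x). auto.
  - apply inv_mcons in Hm. destruct Hm as [Ga [Gb [na [ma [nb [mb [Ta [Hb [HG [-> ->]]]]]]]]]].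
    destruct (IH _ _ _ _ _ _ _ _ _ Ta HS) as [A0 [DA [a0 [b0 [au [bu [TA [HA EA]]]]]]]].
    destruct (IHL _ _ _ _ _ _ _ _ Hb HS) as [B0 [DB [c0 [d0 [cu [du [TB [HB EB]]]]]]]].
    exists (eadd A0 B0), (eadd DA DB), (a0 + c0), (b0 + d0), (au + cu), (bu + du). split; [|split].
    + econstructor; eauto. apply eeq_refl.
    + apply mtyp_app; auto.
    + intros j x. specialize (HG j x). specialize (EA j x). specialize (EB j x).
      pose proof (renv_add pre A0 B0 j x). unfold eadd in *. rewrite !cnt_app in *. lia.
Qed.

Lemma typ_antisubst t : is_lambda t -> typ_antisubst_prop t.
Proof.
  induction t; intros Hl; [apply typ_antisubst_var| | |contradiction];
    intros G sg nn mm s k u g pre H HS; simpl in H.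
  - apply inv_lam in H. destruct H as [P [M [s' [n' [-> [-> [T [HM HE]]]]]]]].
    destruct (IHt Hl _ _ _ _ _ _ _ _ _ T (subst_spec_up _ _ _ _ _ HS)) as [G0 [D [n0 [m0 [nu [mu [T0 [Hu HP]]]]]]]].
    pose proof (lift_support _ _ _ _ _ Hu) as Z. apply mtyp_unlift in Hu.
    exists (etail G0), (ecomp D S), (S n0), m0, nu, mu. split; [|split].
    + econstructor; eauto. intros x. specialize (HM x). specialize (HP 0 x). specialize (Z x).
      unfold eadd in HP. rewrite cnt_app, renv_up_0 in HP. lia. apply eeq_refl.
    + exact Hu.
    + intros j x. specialize (HE j x). specialize (HP (S j) x). pose proof (renv_up_tail pre G0 j x) as RT.
      unfold eadd, etail, ecomp in *. rewrite cnt_app in *. lia.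
  - destruct Hl as [Hl1 Hl2].
    apply inv_app in H. destruct H as [G1 [Da [M [n1 [m1 [n2 [m2 [tau [-> [-> [T [Hu HE]]]]]]]]]]]].
    destruct (IHt1 Hl1 _ _ _ _ _ _ _ _ _ T HS) as [A0 [DA [a0 [b0 [au [bu [TA [HA EA]]]]]]]].
    destruct (mtyp_antisubst t2 (IHt2 Hl2) _ _ _ _ _ _ _ _ _ Hu HS) as [B0 [DB [c0 [d0 [cu [du [TB [HB EB]]]]]]]].
    exists (eadd A0 B0), (eadd DA DB), (S (a0 + c0)), (b0 + d0), (au + cu), (bu + du). split; [|split].
    + econstructor; eauto. apply eeq_refl.
    + apply mtyp_app; auto.
    + intros j x. specialize (HE j x). specialize (EA j x). specialize (EB j x).
      pose proof (renv_add pre A0 B0 j x). unfold eadd in *. rewrite !cnt_app in *. lia.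
Qed.

Definition typable t := exists G s n m, typ G t s n m.

Lemma beta_expand t u : is_lambda t -> typable u ->
  forall G s n m, typ G (subst0 u t) s n m -> exists G' n' m', typ G' (App (Lam t) u) s n' m'.
Proof.
  intros Hl [Gu [su [nu [mu Tu]]]] G s n m H.
  destruct (typ_antisubst t Hl _ _ _ _ _ _ _ _ _ H (subst_spec0 u)) as [G0 [D [n0 [m0 [nd [md [T0 [Hu _]]]]]]]].
  destruct (G0 0) as [|a L] eqn:E0.
  - exists (eadd (etail G0) Gu), (S (S n0 + nu)), (m0 + mu).
    eapply (T_app _ (etail G0) Gu (Lam t) u nil s (S n0) m0 nu mu su).
    + eapply T_lam; [exact T0| intros x; rewrite E0; simpl; lia | apply eeq_refl].
    + simpl. apply (proj2 (mtyp_single _ _ _ _ _)). exact Tu.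
    + apply eeq_refl.
  - exists (eadd (etail G0) D), (S (S n0 + nd)), (m0 + md).
    eapply (T_app _ (etail G0) D (Lam t) u (a :: L) s (S n0) m0 nd md su).
    + eapply T_lam; [exact T0| rewrite E0; apply sub_refl | apply eeq_refl].
    + simpl. exact Hu.
    + apply eeq_refl.
Qed.

Lemma beta_expand_apps vs : forall h h', (forall G s n m, typ G h s n m -> exists G' n' m', typ G' h' s n' m') ->
  forall G s n m, typ G (apps h vs) s n m -> exists G' n' m', typ G' (apps h' vs) s n' m'.
Proof.
  induction vs as [|v vs IH]; simpl; intros h h' Hh; auto.
  apply IH. intros G s n m H. apply inv_app in H. destruct H as [G1 [D [M [n1 [m1 [n2 [m2 [tau [-> [-> [T [Hu HE]]]]]]]]]]]].
  destruct (Hh _ _ _ _ T) as [G' [n' [m' T']]].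
  eexists; eexists; eexists. econstructor; eauto. apply eeq_refl.
Qed.

Lemma var_head_typing vs : Forall typable vs -> exists F : ty -> ty, forall h G s n m, typ G h (F s) n m ->
  exists G' n' m', typ G' (apps h vs) s n' m'.
Proof.
  induction 1 as [|v vs [Gv [tv [nv [mv Tv]]]] _ [F HF]].
  - exists (fun s => s). intros h G s n m H. exists G, n, m; auto.
  - exists (fun s => Arr (tv :: nil) (F s)). intros h G s n m H. simpl.
    apply (HF (App h v) (eadd G Gv) s (S (n + nv)) (m + mv)).
    eapply (T_app _ G Gv h v (tv :: nil) (F s) n m nv mv tv); eauto.
    simpl. apply (proj2 (mtyp_single _ _ _ _ _)); eauto. apply eeq_refl.
Qed.

(* By induction on
   [beta_sub_order], according to the head of t = h v1 ... vk: a variable head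
   only needs typable arguments, an abstraction without arguments a typable
   body, and a head redex is typed by expansion of its contractum. *)
Lemma completeness t : Acc beta_sub_order t -> is_lambda t -> typable t.
Proof.
  induction 1 as [t _ IH]. intros Hl.
  destruct (head_decomp t) as [h [vs [-> Hh]]].
  destruct (lam_apps_inv _ _ Hl) as [Hlh Hlv].
  destruct (apps_sub h vs) as [Sh Sv].
  destruct h as [x|b|a c|a c].
  - assert (FT : Forall typable vs).
    { apply Forall_forall. intros v Iv. apply IH. right; auto. rewrite Forall_forall in Hlv; auto. }
    destruct (var_head_typing vs FT) as [F HF].
    destruct (HF (Var x) (esingle x (F (TAt 0) :: nil)) (TAt 0) 1 0) as [G' [n' [m' T']]].
    constructor; apply eeq_refl. exists G', (TAt 0), n', m'; auto.
  - destruct vs as [|u vs].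
    + simpl in *. destruct (IH b) as [G [s [n [m T]]]]. right; apply t_step; constructor. auto.
      exists (etail G), (Arr (G 0) s), (S n), m. econstructor; eauto. apply sub_refl. apply eeq_refl.
    + simpl in *. destruct (lam_apps_inv _ _ Hl) as [[Hb Hu] Hvs].
      assert (Tu : typable u).
      { apply IH; auto. right. apply Sv. left; auto. }
      assert (Tr : typable (apps (subst0 u b) vs)).
      { apply IH. left. apply beta_apps. apply ctx_root. constructor.
        apply lam_apps; auto. apply lam_subst; auto. intros [|n]; simpl; auto. }
      destruct Tr as [G [s [n [m T]]]].
      destruct (beta_expand_apps vs (subst0 u b) (App (Lam b) u) (beta_expand b u Hb Tu) _ _ _ _ T) as [G' [n' [m' T']]].
      exists G', s, n', m'; auto.
  - exfalso; eapply Hh; eauto.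
  - destruct Hlh.
Qed.

Lemma PSN_o : PSN (lj_mod equiv_o).
Proof.
  intros t Hl Hsn. destruct (completeness t (SN_beta_sub_order t Hsn) Hl) as [G [s [n [m T]]]].
  eapply typ_SN; eauto.
Qed.

Lemma PSN_CS : PSN (lj_mod equiv_CS).
Proof.
  intros t Hl Hsn. apply (Acc_incl _ _ (fun a b => lj_mod equiv_o b a)).
  - intros a b [t1 [t2 [A [B C]]]]. exists t1, t2. split; [apply equiv_CS_o; auto|split; auto].
    apply equiv_CS_o; auto.
  - apply PSN_o; auto.
Qed.

Theorem theorem24 :
  (confluent (lj_mod equiv_CS) /\ PSN (lj_mod equiv_CS)) /\
  (confluent (lj_mod equiv_o) /\ PSN (lj_mod equiv_o)).
Proof.
  split; split.
  - exact conf_CS.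
  - exact PSN_CS.
  - exact conf_o.
  - exact PSN_o.
Qed.
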